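(* Let $d>0$, $\alpha>0$, $\gamma>1$. For every $(\theta_0,W_0)\in\Omega_\gamma$ the system $$\dot\theta=G_1(\theta,W),\qquad \dot W=G_2(\theta,W),\qquad (\theta(0),W(0))=(\theta_0,W_0)$$ has a unique solution $(\theta,W)\in C^1(\mathbb{R})\times C^1(\mathbb{R})$ defined for all $t\in\mathbb{R}$ and taking values in $\Omega_\gamma$.
   Context: Fix $d>0$, $\alpha>0$, $\gamma>1$. Let $\theta_\gamma=\operatorname{artanh}(\gamma^{-1/2})$, the unique $\theta>0$ with $\cosh\theta-\gamma^{1/2}\sinh\theta=0$, and $\Omega_\gamma=\{(\theta,W)\in\mathbb{R}^2:\ \theta>0,\ W\in\mathbb{R},\ (\theta,W)\ne(\theta_\gamma,0)\}$. Put $E_\gamma(\theta,W)=\frac{d}{\gamma}(\cosh\theta-\gamma^{1/2}\sinh\theta)^2+W^2$ and $$G_1(\theta,W)=-\frac{\alpha\gamma^{1/2}W}{E_\gamma^{3/2}},\qquad G_2(\theta,W)=-\frac{1}{d^{1/2}}\Big(\frac{\gamma^{3/2}}{\cosh\theta}+\frac{1}{\sinh\theta}\Big)+\frac{\alpha d(\sinh\theta-\gamma^{1/2}\cosh\theta)(\cosh\theta-\gamma^{1/2}\sinh\theta)}{\gamma^{1/2}E_\gamma^{3/2}}.$$ (This models two coaxial circular vortex filaments with vorticities of opposite signs, radii $(d/\gamma)^{1/2}\cosh\theta$, $d^{1/2}\sinh\theta$, axial separation $W$.) *)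

From Stdlib Require Import Reals Lra.
Open Scope R_scope.

Definition artanh (x : R) : R := / 2 * ln ((1 + x) / (1 - x)).
Definition theta_gamma (gamma : R) : R := artanh (/ sqrt gamma).

Definition Omega (gamma th W : R) : Prop :=
  0 < th /\ (th, W) <> (theta_gamma gamma, 0).

Definition Egam (d gamma th W : R) : R :=
  d / gamma * (cosh th - sqrt gamma * sinh th) ^ 2 + W ^ 2.

Definition E32 (d gamma th W : R) : R := (sqrt (Egam d gamma th W)) ^ 3.

Definition G1 (d alpha gamma th W : R) : R :=
  - (alpha * sqrt gamma * W) / E32 d gamma th W.

Definition G2 (d alpha gamma th W : R) : R :=
  - / sqrt d * (sqrt gamma ^ 3 / cosh th + / sinh th)
  + alpha * d * (sinh th - sqrt gamma * cosh th) * (cosh th - sqrt gamma * sinh th)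
    / (sqrt gamma * E32 d gamma th W).

Definition is_global_solution (d alpha gamma th0 W0 : R) (th W : R -> R) : Prop :=
  (forall t, derivable_pt_lim th t (G1 d alpha gamma (th t) (W t))) /\
  (forall t, derivable_pt_lim W t (G2 d alpha gamma (th t) (W t))) /\
  continuity (fun t => G1 d alpha gamma (th t) (W t)) /\
  continuity (fun t => G2 d alpha gamma (th t) (W t)) /\
  th 0 = th0 /\ W 0 = W0 /\
  (forall t, Omega gamma (th t) (W t)).

From Stdlib Require Import Reals Lra Lia Classical ClassicalEpsilon.
From Coquelicot Require Import Coquelicot.
Open Scope R_scope.

(* Omega is the set where [th > 0] and [Egam > 0], on which [G1] and [G2] are locally Lipschitz;
   local existence follows by Picard iteration and uniqueness by a contraction estimate.
   Solutions are global because
     hamiltonian = alpha sqrt(gamma) / sqrt(Egam) + potential(th)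
   is conserved: since [potential] tends to [-oo] as [th] tends to [0], a level set of
   [hamiltonian] stays away from [th = 0] and from [Egam = 0], so [|G1| <= alpha sqrt(gamma) / Egam] is
   bounded, [th] grows at most linearly and [G2] is bounded on bounded time intervals.  A
   solution with bounded speed confined to a closed subset of the domain has limits at the
   ends of its interval, through which the local solutions continue it. *)

Lemma Rabs_dist_triang a b c : Rabs (a - c) <= Rabs (a - b) + Rabs (b - c).
Proof. replace (a - c) with ((a - b) + (b - c)) by ring. apply Rabs_triang. Qed.

Lemma exists_pos_below a b : 0 < a -> 0 < b -> exists e, 0 < e /\ e <= a /\ e <= b.
Proof. intros. exists (Rmin a b). split; [apply Rmin_pos; auto|split; [apply Rmin_l|apply Rmin_r]]. Qed.

Lemma exp_le_compat x y : x <= y -> exp x <= exp y.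
Proof. intros H. destruct H as [h | ->]; [left; apply exp_increasing; auto|lra]. Qed.

Lemma pow_half_le n m : (n <= m)%nat -> (/2)^m <= (/2)^n.
Proof.
  intros H. replace m with (n + (m - n))%nat by lia. generalize (m - n)%nat as k. intros k.
  induction k as [|k IH]; [rewrite Nat.add_0_r; lra|].
  rewrite Nat.add_succ_r. simpl. assert (0 <= (/2)^(n+k)) by (apply pow_le; lra). lra.
Qed.

Lemma geom_half_cv K : Un_cv (fun n => K * (/2)^n) 0.
Proof.
  intros eps Heps. destruct (cv_pow_half K eps Heps) as [N HN].
  exists N. intros n Hn. rewrite pow_inv. exact (HN n Hn).
Qed.

Lemma geom_half_le K eps : 0 < eps -> exists n, K * (/2)^n <= eps.
Proof.
  intros He. destruct (geom_half_cv K eps He) as [N HN]. exists N. specialize (HN N (le_n N)).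
  cbv beta in HN. unfold R_dist in HN. rewrite Rminus_0_r in HN. pose proof (Rle_abs (K * (/2)^N)). lra.
Qed.

Lemma le_of_le_geom_half a b K : (forall n, a <= b + K * (/2)^n) -> a <= b.
Proof.
  intros H. destruct (Rle_or_lt a b) as [h|h]; auto.
  destruct (geom_half_le K ((a - b) / 2)) as [N HN]; [lra|]. specialize (H N). lra.
Qed.

Lemma Un_cv_dist_le (u : nat -> R) l c K :
  Un_cv u l -> (forall n, Rabs (u n - c) <= K) -> Rabs (l - c) <= K.
Proof.
  intros Hu Hb. destruct (Rle_or_lt (Rabs (l - c)) K) as [H|H]; auto.
  destruct (Hu (Rabs (l - c) - K)) as [N HN]; [lra|].
  specialize (HN N (le_n N)). specialize (Hb N). unfold R_dist in HN.
  pose proof (Rabs_dist_triang l (u N) c). rewrite Rabs_minus_sym in HN. lra.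
Qed.

Lemma cauchy_limit (u e : nat -> R) :
  Un_cv e 0 -> (forall n m, (n <= m)%nat -> Rabs (u m - u n) <= e n) ->
  {l | forall n, Rabs (l - u n) <= e n}.
Proof.
  intros He Hu.
  assert (Hc : Cauchy_crit u).
  { intros eps Heps. destruct (He eps Heps) as [N HN]. exists N.
    intros n m Hn Hm. unfold R_dist.
    destruct (Nat.le_ge_cases n m) as [Hnm|Hnm].
    - specialize (Hu n m Hnm). specialize (HN n Hn). unfold R_dist in HN.
      rewrite Rminus_0_r in HN. rewrite Rabs_minus_sym.
      pose proof (Rle_abs (e n)). lra.
    - specialize (Hu m n Hnm). specialize (HN m Hm). unfold R_dist in HN.
      rewrite Rminus_0_r in HN. pose proof (Rle_abs (e m)). lra. }
  destruct (Rcomplete.R_complete u Hc) as [l Hl]. exists l. intros n.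
  apply (Un_cv_dist_le (fun m => u (m + n)%nat)).
  - intros eps Heps. destruct (Hl eps Heps) as [N HN]. exists N.
    intros m Hm. apply HN. lia.
  - intros m. apply Hu. lia.
Qed.

Lemma continuous_of_eps_delta (f : R -> R) x :
  (forall eps, 0 < eps -> exists del, 0 < del /\
     forall y, Rabs (y - x) < del -> Rabs (f y - f x) < eps) ->
  continuous f x.
Proof.
  intros H. apply continuity_pt_filterlim.
  intros eps Heps. destruct (H eps Heps) as [del [Hd Hy]]. exists del; split; auto.
  intros y [_ Hy']. apply Hy; auto.
Qed.

Lemma continuous_of_lipschitz (f : R -> R) K x :
  (forall s t, Rabs (f s - f t) <= K * Rabs (s - t)) -> continuous f x.
Proof.
  intros H. apply continuous_of_eps_delta. intros eps Heps.
  pose proof (Rabs_pos K). pose proof (Rle_abs K).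
  exists (eps / (Rabs K + 1)). split; [apply Rdiv_lt_0_compat; lra|].
  intros y Hy. specialize (H y x). pose proof (Rabs_pos (y - x)).
  assert (K * Rabs (y - x) <= Rabs K * (eps / (Rabs K + 1))) by
    (apply Rle_trans with (Rabs K * Rabs (y - x)); [apply Rmult_le_compat_r|apply Rmult_le_compat_l]; lra).
  assert (Rabs K * (eps / (Rabs K + 1)) < eps).
  { apply Rmult_lt_reg_r with (Rabs K + 1); [lra|]. field_simplify; nra. }
  lra.
Qed.

Lemma derivable_pt_lim_eps_delta (f : R -> R) x l :
  derivable_pt_lim f x l -> forall eps, 0 < eps ->
  exists del, 0 < del /\ forall y, Rabs (y - x) < del -> Rabs (f y - f x) < eps.
Proof.
  intros H eps Heps.
  assert (Hc : continuity_pt f x) by (apply derivable_continuous_pt; exists l; auto).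
  destruct (Hc eps Heps) as [del [Hd Hy]]. exists del; split; auto.
  intros y Hy'. destruct (Req_dec y x) as [->|e].
  - rewrite Rminus_diag, Rabs_R0; auto.
  - apply (Hy y). split; auto. split; [exact I|auto].
Qed.

Lemma derivable_pt_lim_locally_eq (f g : R -> R) t del l :
  0 < del -> (forall u, Rabs (u - t) < del -> f u = g u) ->
  derivable_pt_lim f t l -> derivable_pt_lim g t l.
Proof.
  intros Hd Heq Hf eps Heps. destruct (Hf eps Heps) as [d1 Hd1].
  assert (Hm : 0 < Rmin d1 del) by (apply Rmin_pos; [apply cond_pos|auto]).
  exists (mkposreal _ Hm). intros k Hk Hk'. simpl in Hk'.
  rewrite <- !Heq.
  - apply Hd1; auto. pose proof (Rmin_l d1 del); lra.
  - rewrite Rminus_diag, Rabs_R0; auto.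
  - replace (t + k - t) with k by ring. pose proof (Rmin_r d1 del); lra.
Qed.

Lemma derivable_pt_lim_const_plus (c : R) (f : R -> R) t l :
  derivable_pt_lim f t l -> derivable_pt_lim (fun u => c + f u) t l.
Proof.
  intros H. replace l with (0 + l) by ring.
  apply (derivable_pt_lim_plus (fun _ => c) f); [apply derivable_pt_lim_const|auto].
Qed.

Section continuous_integrand.

Variable g : R -> R.
Hypothesis g_cont : forall z, continuous g z.

Lemma ex_RInt_continuous u v : ex_RInt g u v.
Proof. apply (@ex_RInt_continuous R_CompleteNormedModule). intros; auto. Qed.

Lemma abs_RInt_le_dist a b K :
  (forall z, Rabs (g z) <= K) -> Rabs (RInt g a b) <= K * Rabs (b - a).
Proof.
  intros Hb.
  destruct (Rle_or_lt a b) as [H|H].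
  - rewrite (Rabs_pos_eq (b - a)), Rmult_comm by lra.
    apply abs_RInt_le_const; auto using ex_RInt_continuous.
  - rewrite <- opp_RInt_swap by apply ex_RInt_continuous. unfold opp; simpl.
    rewrite Rabs_Ropp, Rabs_minus_sym, (Rabs_pos_eq (a - b)), Rmult_comm by lra.
    apply abs_RInt_le_const; auto using ex_RInt_continuous; lra.
Qed.

Lemma RInt_upper_lipschitz a u v K :
  (forall z, Rabs (g z) <= K) -> Rabs (RInt g a u - RInt g a v) <= K * Rabs (u - v).
Proof.
  intros Hb. rewrite <- (RInt_Chasles g a v u) by apply ex_RInt_continuous.
  unfold plus; simpl. rewrite Rplus_minus_l. apply abs_RInt_le_dist; auto.
Qed.

Lemma derivable_pt_lim_RInt_upper a t : derivable_pt_lim (fun u => RInt g a u) t (g t).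
Proof.
  apply is_derive_Reals. apply (is_derive_RInt g (fun u => RInt g a u) a t); auto.
  apply filter_forall. intros b. apply (@RInt_correct R_CompleteNormedModule), ex_RInt_continuous.
Qed.

End continuous_integrand.

Lemma RInt_minus_continuous (g1 g2 : R -> R) a b :
  (forall z, continuous g1 z) -> (forall z, continuous g2 z) ->
  RInt g1 a b - RInt g2 a b = RInt (fun s => g1 s - g2 s) a b.
Proof. intros. rewrite (RInt_minus g1 g2) by (apply ex_RInt_continuous; auto). reflexivity. Qed.
(** * Boxes, Lipschitz bounds and Picard iteration *)

Definition in_box (p1 p2 r q1 q2 : R) : Prop := Rabs (q1 - p1) <= r /\ Rabs (q2 - p2) <= r.

Definition lipschitz_on_box (f : R -> R -> R) (p1 p2 r L : R) : Prop :=
  forall q1 q2 q1' q2', in_box p1 p2 r q1 q2 -> in_box p1 p2 r q1' q2' ->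
    Rabs (f q1 q2 - f q1' q2') <= L * (Rabs (q1 - q1') + Rabs (q2 - q2')).

Definition bounded_on_box (f : R -> R -> R) (p1 p2 r M : R) : Prop :=
  forall q1 q2, in_box p1 p2 r q1 q2 -> Rabs (f q1 q2) <= M.

Definition lipschitz_curve_in_box (p1 p2 r K : R) (X Y : R -> R) : Prop :=
  (forall t, in_box p1 p2 r (X t) (Y t)) /\
  (forall s t, Rabs (X s - X t) <= K * Rabs (s - t) /\ Rabs (Y s - Y t) <= K * Rabs (s - t)).

Lemma in_box_mono p1 p2 r r' q1 q2 : r' <= r -> in_box p1 p2 r' q1 q2 -> in_box p1 p2 r q1 q2.
Proof. intros H [A B]; split; lra. Qed.

Lemma in_box_center p1 p2 r : 0 <= r -> in_box p1 p2 r p1 p2.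
Proof. intros; split; rewrite Rminus_diag, Rabs_R0; lra. Qed.

Lemma in_box_recenter p1 p2 r q1 q2 r' z1 z2 :
  Rabs (q1 - p1) + r' <= r -> Rabs (q2 - p2) + r' <= r ->
  in_box q1 q2 r' z1 z2 -> in_box p1 p2 r z1 z2.
Proof.
  intros E1 E2 [I1 I2].
  pose proof (Rabs_dist_triang z1 q1 p1). pose proof (Rabs_dist_triang z2 q2 p2). split; lra.
Qed.

Lemma bounded_on_box_of_lipschitz f p1 p2 r L :
  0 <= L -> 0 <= r -> lipschitz_on_box f p1 p2 r L ->
  bounded_on_box f p1 p2 r (Rabs (f p1 p2) + L * (2 * r)).
Proof.
  intros HL Hr H q1 q2 Hq. pose proof (H _ _ _ _ Hq (in_box_center p1 p2 r Hr)).
  destruct Hq as [A B]. pose proof (Rabs_triang_inv (f q1 q2) (f p1 p2)).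
  assert (L * (Rabs (q1 - p1) + Rabs (q2 - p2)) <= L * (2 * r)) by (apply Rmult_le_compat_l; lra).
  lra.
Qed.

Section box_curves.

Variables (f : R -> R -> R) (p1 p2 r L K : R).
Hypotheses (f_lip : lipschitz_on_box f p1 p2 r L) (L_ge0 : 0 <= L).

Lemma continuous_comp_curve (X Y : R -> R) z :
  lipschitz_curve_in_box p1 p2 r K X Y -> continuous (fun s => f (X s) (Y s)) z.
Proof.
  intros [Hin HK]. apply (continuous_of_lipschitz _ (L * (2 * K))). intros s t.
  pose proof (f_lip _ _ _ _ (Hin s) (Hin t)). destruct (HK s t).
  assert (L * (Rabs (X s - X t) + Rabs (Y s - Y t)) <= L * (K * Rabs (s - t) + K * Rabs (s - t)))
    by (apply Rmult_le_compat_l; lra).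
  lra.
Qed.

Lemma RInt_comp_curves_dist (X Y X' Y' : R -> R) t0 c del :
  lipschitz_curve_in_box p1 p2 r K X Y -> lipschitz_curve_in_box p1 p2 r K X' Y' ->
  (forall s, Rabs (X s - X' s) + Rabs (Y s - Y' s) <= del) ->
  Rabs (RInt (fun s => f (X s) (Y s)) t0 c - RInt (fun s => f (X' s) (Y' s)) t0 c)
    <= L * del * Rabs (c - t0).
Proof.
  intros HC HC' Hdel.
  rewrite RInt_minus_continuous by (intro z; apply continuous_comp_curve; auto).
  apply abs_RInt_le_dist.
  - intro z. apply (continuous_minus (fun s => f (X s) (Y s)) (fun s => f (X' s) (Y' s)));
      apply continuous_comp_curve; auto.
  - intros z. eapply Rle_trans; [apply f_lip; [apply HC|apply HC']|].
    apply Rmult_le_compat_l; auto.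
Qed.

End box_curves.

Definition clamp (a b t : R) : R := Rmax a (Rmin b t).

Lemma clamp_in a b t : a <= b -> a <= clamp a b t <= b.
Proof. intros. unfold clamp, Rmax, Rmin. repeat destruct Rle_dec; lra. Qed.

Lemma clamp_dist a b s t : Rabs (clamp a b s - clamp a b t) <= Rabs (s - t).
Proof. unfold clamp, Rmax, Rmin. repeat destruct Rle_dec; unfold Rabs; repeat destruct Rcase_abs; lra. Qed.

Lemma clamp_id a b t : a <= t <= b -> clamp a b t = t.
Proof. intros. unfold clamp, Rmax, Rmin. repeat destruct Rle_dec; lra. Qed.

Lemma clamp_near t0 h t : 0 < h -> Rabs (clamp (t0 - h) (t0 + h) t - t0) <= h.
Proof. intros. pose proof (clamp_in (t0 - h) (t0 + h) t ltac:(lra)). unfold Rabs; destruct Rcase_abs; lra. Qed.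

Section picard.

Variables (F1 F2 : R -> R -> R) (p1 p2 r L M t0 h : R).
Hypotheses (F1_lip : lipschitz_on_box F1 p1 p2 r L) (F2_lip : lipschitz_on_box F2 p1 p2 r L)
  (F1_bnd : bounded_on_box F1 p1 p2 r M) (F2_bnd : bounded_on_box F2 p1 p2 r M)
  (L_ge0 : 0 <= L) (h_pos : 0 < h) (M_ge0 : 0 <= M)
  (hM_le : h * M <= r) (hL_le : 4 * h * L <= 1).

(* The clamped time keeps every iterate defined and Lipschitz on all of R. *)
Fixpoint picard_iter (n : nat) : R -> R * R :=
  match n with
  | O => fun _ => (p1, p2)
  | S n => fun t =>
      (p1 + RInt (fun s => F1 (fst (picard_iter n s)) (snd (picard_iter n s))) t0 (clamp (t0 - h) (t0 + h) t),
       p2 + RInt (fun s => F2 (fst (picard_iter n s)) (snd (picard_iter n s))) t0 (clamp (t0 - h) (t0 + h) t))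
  end.

Lemma picard_iter_S n t : picard_iter (S n) t =
  (p1 + RInt (fun s => F1 (fst (picard_iter n s)) (snd (picard_iter n s))) t0 (clamp (t0 - h) (t0 + h) t),
   p2 + RInt (fun s => F2 (fst (picard_iter n s)) (snd (picard_iter n s))) t0 (clamp (t0 - h) (t0 + h) t)).
Proof. reflexivity. Qed.

Lemma r_ge0 : 0 <= r.
Proof. nra. Qed.

Lemma picard_integral_step f (X Y : R -> R) :
  lipschitz_on_box f p1 p2 r L -> bounded_on_box f p1 p2 r M ->
  lipschitz_curve_in_box p1 p2 r M X Y ->
  let I t := RInt (fun s => f (X s) (Y s)) t0 (clamp (t0 - h) (t0 + h) t) in
  (forall t, Rabs (I t) <= r) /\ (forall s t, Rabs (I s - I t) <= M * Rabs (s - t)).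
Proof.
  intros Hlip Hbnd HC I.
  assert (Hcont : forall z, continuous (fun s => f (X s) (Y s)) z)
    by (intro z; apply (continuous_comp_curve f p1 p2 r L M); auto).
  assert (Hb : forall z, Rabs (f (X z) (Y z)) <= M) by (intro z; apply Hbnd, HC).
  split.
  - intros t. eapply Rle_trans; [apply abs_RInt_le_dist; eauto|].
    pose proof (clamp_near t0 h t h_pos). nra.
  - intros s t. eapply Rle_trans; [apply RInt_upper_lipschitz; eauto|].
    apply Rmult_le_compat_l; [lra|apply clamp_dist].
Qed.

Lemma picard_iter_curve n :
  lipschitz_curve_in_box p1 p2 r M (fun s => fst (picard_iter n s)) (fun s => snd (picard_iter n s)).
Proof.
  induction n as [|n IH].
  - split.
    + intros t. apply in_box_center, r_ge0.
    + intros s t. simpl. rewrite !Rminus_diag, Rabs_R0. pose proof (Rabs_pos (s - t)). nra.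
  - destruct (picard_integral_step F1 _ _ F1_lip F1_bnd IH) as [A1 B1].
    destruct (picard_integral_step F2 _ _ F2_lip F2_bnd IH) as [A2 B2].
    simpl. split.
    + intros t. unfold in_box. rewrite !Rplus_minus_l. auto.
    + intros s t. rewrite !Rminus_plus_l_l. auto.
Qed.

Lemma picard_iter_step n t :
  Rabs (fst (picard_iter (S n) t) - fst (picard_iter n t)) +
  Rabs (snd (picard_iter (S n) t) - snd (picard_iter n t)) <= 2 * r * (/2)^n.
Proof.
  revert t. induction n as [|n IH]; intros t.
  - destruct (picard_iter_curve 1) as [Hin _]. destruct (Hin t). simpl in *. lra.
  - pose proof (clamp_near t0 h t h_pos).
    assert (H1 := RInt_comp_curves_dist F1 p1 p2 r L M F1_lip L_ge0 _ _ _ _ t0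
      (clamp (t0 - h) (t0 + h) t) _ (picard_iter_curve (S n)) (picard_iter_curve n) IH).
    assert (H2 := RInt_comp_curves_dist F2 p1 p2 r L M F2_lip L_ge0 _ _ _ _ t0
      (clamp (t0 - h) (t0 + h) t) _ (picard_iter_curve (S n)) (picard_iter_curve n) IH).
    rewrite (picard_iter_S (S n) t), (picard_iter_S n t). cbn [fst snd]. rewrite !Rminus_plus_l_l.
    assert (0 <= r * (/2)^n) by (apply Rmult_le_pos; [apply r_ge0|apply pow_le; lra]).
    assert (L * (2 * r * (/2)^n) * Rabs (clamp (t0 - h) (t0 + h) t - t0) <= L * (2 * r * (/2)^n) * h)
      by (apply Rmult_le_compat_l; nra).
    assert (L * (2 * r * (/2)^n) * h <= r * (/2)^n / 2).
    { replace (L * (2 * r * (/2)^n) * h) with ((4 * h * L) * (r * (/2)^n / 2)) by field.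
      rewrite <- (Rmult_1_l (r * (/2)^n / 2)) at 2. apply Rmult_le_compat_r; lra. }
    simpl pow. lra.
Qed.

Lemma picard_iter_cauchy n m t : (n <= m)%nat ->
  Rabs (fst (picard_iter m t) - fst (picard_iter n t)) <= 4 * r * (/2)^n /\
  Rabs (snd (picard_iter m t) - snd (picard_iter n t)) <= 4 * r * (/2)^n.
Proof.
  intros Hnm. replace m with (n + (m - n))%nat by lia.
  assert (Hk : forall k,
    Rabs (fst (picard_iter (n + k) t) - fst (picard_iter n t)) <= 4 * r * ((/2)^n - (/2)^(n + k)) /\
    Rabs (snd (picard_iter (n + k) t) - snd (picard_iter n t)) <= 4 * r * ((/2)^n - (/2)^(n + k))).
  { induction k as [|k [I1 I2]].
    - rewrite Nat.add_0_r, !Rminus_diag, Rabs_R0, Rmult_0_r. lra.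
    - rewrite Nat.add_succ_r. pose proof (picard_iter_step (n + k) t) as Hd.
      pose proof (Rabs_dist_triang (fst (picard_iter (S (n + k)) t)) (fst (picard_iter (n + k) t)) (fst (picard_iter n t))).
      pose proof (Rabs_dist_triang (snd (picard_iter (S (n + k)) t)) (snd (picard_iter (n + k) t)) (snd (picard_iter n t))).
      pose proof (Rabs_pos (fst (picard_iter (S (n + k)) t) - fst (picard_iter (n + k) t))).
      pose proof (Rabs_pos (snd (picard_iter (S (n + k)) t) - snd (picard_iter (n + k) t))).
      simpl pow. split; nra. }
  destruct (Hk (m - n)%nat) as [A B].
  assert (0 <= (/2)^(n + (m - n))) by (apply pow_le; lra). pose proof r_ge0.
  split; nra.
Qed.

Lemma picard_limit : exists X Y : R -> R,
  (forall n t, Rabs (X t - fst (picard_iter n t)) <= 4 * r * (/2)^n /\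
               Rabs (Y t - snd (picard_iter n t)) <= 4 * r * (/2)^n) /\
  lipschitz_curve_in_box p1 p2 r M X Y.
Proof.
  pose proof r_ge0.
  set (lim1 t := cauchy_limit (fun n => fst (picard_iter n t)) _ (geom_half_cv (4 * r))
                   (fun n m Hnm => proj1 (picard_iter_cauchy n m t Hnm))).
  set (lim2 t := cauchy_limit (fun n => snd (picard_iter n t)) _ (geom_half_cv (4 * r))
                   (fun n m Hnm => proj2 (picard_iter_cauchy n m t Hnm))).
  exists (fun t => proj1_sig (lim1 t)), (fun t => proj1_sig (lim2 t)).
  assert (HX : forall n t, Rabs (proj1_sig (lim1 t) - fst (picard_iter n t)) <= 4 * r * (/2)^n)
    by (intros n t; apply (proj2_sig (lim1 t))).
  assert (HY : forall n t, Rabs (proj1_sig (lim2 t) - snd (picard_iter n t)) <= 4 * r * (/2)^n)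
    by (intros n t; apply (proj2_sig (lim2 t))).
  clearbody lim1 lim2. split; [split; auto|split].
  - intros t. split; apply (le_of_le_geom_half _ _ (4 * r)); intros n;
      destruct (picard_iter_curve n) as [Hi _]; destruct (Hi t) as [A B].
    + pose proof (Rabs_dist_triang (proj1_sig (lim1 t)) (fst (picard_iter n t)) p1). specialize (HX n t). lra.
    + pose proof (Rabs_dist_triang (proj1_sig (lim2 t)) (snd (picard_iter n t)) p2). specialize (HY n t). lra.
  - intros s t. split; apply (le_of_le_geom_half _ _ (8 * r)); intros n;
      destruct (picard_iter_curve n) as [_ Hl]; destruct (Hl s t) as [A B].
    + pose proof (Rabs_dist_triang (proj1_sig (lim1 s)) (fst (picard_iter n s)) (proj1_sig (lim1 t))).
      pose proof (Rabs_dist_triang (fst (picard_iter n s)) (fst (picard_iter n t)) (proj1_sig (lim1 t))).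
      pose proof (HX n s). pose proof (HX n t) as Ht. rewrite Rabs_minus_sym in Ht. lra.
    + pose proof (Rabs_dist_triang (proj1_sig (lim2 s)) (snd (picard_iter n s)) (proj1_sig (lim2 t))).
      pose proof (Rabs_dist_triang (snd (picard_iter n s)) (snd (picard_iter n t)) (proj1_sig (lim2 t))).
      pose proof (HY n s). pose proof (HY n t) as Ht. rewrite Rabs_minus_sym in Ht. lra.
Qed.

Lemma picard_limit_integral f p (X Y Z : R -> R) :
  lipschitz_on_box f p1 p2 r L -> lipschitz_curve_in_box p1 p2 r M X Y ->
  (forall n t, Rabs (X t - fst (picard_iter n t)) <= 4 * r * (/2)^n /\
               Rabs (Y t - snd (picard_iter n t)) <= 4 * r * (/2)^n) ->
  (forall n t, Rabs (Z t - (p + RInt (fun s => f (fst (picard_iter n s)) (snd (picard_iter n s)))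
                                   t0 (clamp (t0 - h) (t0 + h) t))) <= 2 * r * (/2)^n) ->
  forall t, Z t = p + RInt (fun s => f (X s) (Y s)) t0 (clamp (t0 - h) (t0 + h) t).
Proof.
  intros Hf HC Hlim HZ t. pose proof r_ge0.
  apply Rminus_diag_uniq, Rabs_eq_0, Rle_antisym; [|apply Rabs_pos].
  apply (le_of_le_geom_half _ 0 (4 * r)). intros n.
  assert (Hd : forall s, Rabs (fst (picard_iter n s) - X s) + Rabs (snd (picard_iter n s) - Y s)
                 <= 8 * r * (/2)^n).
  { intros s. destruct (Hlim n s) as [A B]. rewrite Rabs_minus_sym in A, B. lra. }
  pose proof (RInt_comp_curves_dist f p1 p2 r L M Hf L_ge0 _ _ _ _ t0
    (clamp (t0 - h) (t0 + h) t) _ (picard_iter_curve n) HC Hd) as HI.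
  pose proof (clamp_near t0 h t h_pos).
  assert (0 <= 2 * r * (/2)^n) by (pose proof (pow_le (/2) n ltac:(lra)); nra).
  assert (L * (8 * r * (/2)^n) * Rabs (clamp (t0 - h) (t0 + h) t - t0) <= 2 * r * (/2)^n).
  { apply Rle_trans with ((4 * h * L) * (2 * r * (/2)^n)); [|nra].
    replace ((4 * h * L) * (2 * r * (/2)^n)) with (L * (8 * r * (/2)^n) * h) by ring.
    apply Rmult_le_compat_l; [|lra]. apply Rmult_le_pos; lra. }
  pose proof (Rabs_dist_triang (Z t)
    (p + RInt (fun s => f (fst (picard_iter n s)) (snd (picard_iter n s))) t0 (clamp (t0 - h) (t0 + h) t))
    (p + RInt (fun s => f (X s) (Y s)) t0 (clamp (t0 - h) (t0 + h) t))).
  rewrite Rminus_plus_l_l in H3. specialize (HZ n t). lra.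
Qed.

Lemma picard_local_solution : exists X Y : R -> R,
  X t0 = p1 /\ Y t0 = p2 /\ (forall t, in_box p1 p2 r (X t) (Y t)) /\
  (forall t, t0 - h < t < t0 + h ->
     derivable_pt_lim X t (F1 (X t) (Y t)) /\ derivable_pt_lim Y t (F2 (X t) (Y t))).
Proof.
  destruct picard_limit as [X [Y [Hlim HC]]].
  assert (HZ1 : forall n t, Rabs (X t - (p1 + RInt (fun s => F1 (fst (picard_iter n s)) (snd (picard_iter n s)))
                                   t0 (clamp (t0 - h) (t0 + h) t))) <= 2 * r * (/2)^n).
  { intros n t. pose proof (proj1 (Hlim (S n) t)) as H.
    rewrite picard_iter_S in H. cbn [fst pow] in H. lra. }
  assert (HZ2 : forall n t, Rabs (Y t - (p2 + RInt (fun s => F2 (fst (picard_iter n s)) (snd (picard_iter n s)))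
                                   t0 (clamp (t0 - h) (t0 + h) t))) <= 2 * r * (/2)^n).
  { intros n t. pose proof (proj2 (Hlim (S n) t)) as H.
    rewrite picard_iter_S in H. cbn [snd pow] in H. lra. }
  pose proof (picard_limit_integral F1 p1 X Y X F1_lip HC Hlim HZ1) as HX.
  pose proof (picard_limit_integral F2 p2 X Y Y F2_lip HC Hlim HZ2) as HY.
  assert (Hcont : forall f, lipschitz_on_box f p1 p2 r L -> forall z, continuous (fun s => f (X s) (Y s)) z)
    by (intros f Hf z; apply (continuous_comp_curve f p1 p2 r L M); auto).
  assert (Hcl0 : clamp (t0 - h) (t0 + h) t0 = t0) by (apply clamp_id; lra).
  exists X, Y. split; [|split; [|split]].
  - rewrite HX, Hcl0, RInt_point. unfold zero; simpl. ring.
  - rewrite HY, Hcl0, RInt_point. unfold zero; simpl. ring.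
  - apply HC.
  - intros t Ht.
    assert (Hdel : 0 < Rmin (t - (t0 - h)) (t0 + h - t)) by (apply Rmin_pos; lra).
    assert (Hloc : forall u, Rabs (u - t) < Rmin (t - (t0 - h)) (t0 + h - t) ->
                     clamp (t0 - h) (t0 + h) u = u).
    { intros u Hu. apply clamp_id. pose proof (Rmin_l (t - (t0 - h)) (t0 + h - t)).
      pose proof (Rmin_r (t - (t0 - h)) (t0 + h - t)). unfold Rabs in Hu; destruct Rcase_abs in Hu; lra. }
    split.
    + apply (derivable_pt_lim_locally_eq (fun u => p1 + RInt (fun s => F1 (X s) (Y s)) t0 u) X t _ _ Hdel).
      * intros u Hu. rewrite (HX u), Hloc; auto.
      * apply derivable_pt_lim_const_plus, (derivable_pt_lim_RInt_upper (fun s => F1 (X s) (Y s))), Hcont, F1_lip.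
    + apply (derivable_pt_lim_locally_eq (fun u => p2 + RInt (fun s => F2 (X s) (Y s)) t0 u) Y t _ _ Hdel).
      * intros u Hu. rewrite (HY u), Hloc; auto.
      * apply derivable_pt_lim_const_plus, (derivable_pt_lim_RInt_upper (fun s => F2 (X s) (Y s))), Hcont, F2_lip.
Qed.

End picard.

Lemma mean_value_bound (f f' : R -> R) a b K :
  (forall c, Rmin a b <= c <= Rmax a b -> derivable_pt_lim f c (f' c) /\ Rabs (f' c) <= K) ->
  Rabs (f b - f a) <= K * Rabs (b - a).
Proof.
  intros H. destruct (MVT_abs f f' a b) as [c [Hc1 Hc2]]; [intros c Hc; apply H, Hc|].
  rewrite Hc1. apply Rmult_le_compat_r; [apply Rabs_pos|apply H, Hc2].
Qed.

Lemma between_in_interval lo hi a b c :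
  lo < a < hi -> lo < b < hi -> Rmin a b <= c <= Rmax a b -> lo < c < hi.
Proof. intros. unfold Rmin, Rmax in *. destruct Rle_dec; lra. Qed.

Lemma between_dist_le a b c del :
  Rabs (b - a) <= del -> Rmin a b <= c <= Rmax a b -> Rabs (c - a) <= del.
Proof. intros. unfold Rmin, Rmax in *. destruct Rle_dec; unfold Rabs in *; repeat destruct Rcase_abs; lra. Qed.

Lemma eq_of_frequently_eq (f g : R -> R) t l l' :
  derivable_pt_lim f t l -> derivable_pt_lim g t l' ->
  (forall del, 0 < del -> exists u, Rabs (u - t) < del /\ f u = g u) -> f t = g t.
Proof.
  intros Hf Hg H. apply NNPP. intros Hne.
  assert (He : 0 < Rabs (f t - g t) / 2) by (apply Rdiv_lt_0_compat; [apply Rabs_pos_lt; lra|lra]).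
  destruct (derivable_pt_lim_eps_delta _ _ _ Hf _ He) as [e1 [He1 C1]].
  destruct (derivable_pt_lim_eps_delta _ _ _ Hg _ He) as [e2 [He2 C2]].
  destruct (exists_pos_below _ _ He1 He2) as [e [Hee [Ha Hb]]].
  destruct (H e Hee) as [u [Hu Q]].
  specialize (C1 u ltac:(lra)). specialize (C2 u ltac:(lra)). rewrite Q in C1.
  pose proof (Rabs_dist_triang (f t) (g u) (g t)). rewrite Rabs_minus_sym in C1. lra.
Qed.

Lemma interval_connected_fwd (Q : R -> Prop) a b tau :
  a < tau < b ->
  (forall t, a < t < b -> Q t -> exists del, 0 < del /\ forall u, Rabs (u - t) < del -> Q u) ->
  (forall t, a < t < b -> (forall del, 0 < del -> exists u, Rabs (u - t) < del /\ Q u) -> Q t) ->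
  Q tau -> forall t, tau <= t < b -> Q t.
Proof.
  intros Htau Hop Hcl Q0 t Ht.
  set (E := fun s => tau <= s <= t /\ forall u, tau <= u <= s -> Q u).
  assert (HE : E tau) by (split; [lra|]; intros u Hu; replace u with tau by lra; auto).
  assert (Hb : bound E) by (exists t; intros s [Hs _]; lra).
  destruct (completeness E Hb (ex_intro _ _ HE)) as [m [Hub Hlub]].
  assert (Hmt : m <= t) by (apply Hlub; intros s [Hs _]; lra).
  assert (Htm : tau <= m) by (apply Hub, HE).
  assert (Hbelow : forall u, tau <= u < m -> Q u).
  { intros u Hu. destruct (classic (exists s, E s /\ u <= s)) as [[s [[Hs1 Hs2] Hs3]]|Hno].
    - apply Hs2. lra.
    - exfalso. assert (m <= u); [|lra]. apply Hlub. intros s Hs.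
      destruct (Rle_or_lt s u) as [h|h]; auto. exfalso; apply Hno; exists s; split; auto; lra. }
  assert (Qm : Q m).
  { destruct (Req_dec m tau) as [->|e]; auto.
    apply Hcl; [lra|]. intros del Hdel. exists (Rmax tau (m - del / 2)). split.
    - unfold Rmax; destruct Rle_dec; unfold Rabs; destruct Rcase_abs; lra.
    - apply Hbelow. unfold Rmax; destruct Rle_dec; lra. }
  destruct (Req_dec m t) as [<-|e]; auto.
  exfalso. destruct (Hop m ltac:(lra) Qm) as [del [Hdel Hq]].
  assert (HEm : E (Rmin (m + del / 2) t)).
  { split; [unfold Rmin; destruct Rle_dec; lra|].
    intros u Hu. destruct (Rlt_or_le u m) as [h|h]; [apply Hbelow; lra|].
    apply Hq. unfold Rmin in Hu; destruct Rle_dec in Hu; unfold Rabs; destruct Rcase_abs; lra. }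
  specialize (Hub _ HEm). unfold Rmin in Hub; destruct Rle_dec in Hub; lra.
Qed.

Lemma interval_connected (Q : R -> Prop) a b tau :
  a < tau < b ->
  (forall t, a < t < b -> Q t -> exists del, 0 < del /\ forall u, Rabs (u - t) < del -> Q u) ->
  (forall t, a < t < b -> (forall del, 0 < del -> exists u, Rabs (u - t) < del /\ Q u) -> Q t) ->
  Q tau -> forall t, a < t < b -> Q t.
Proof.
  intros Htau Hop Hcl Q0 t Ht. destruct (Rle_or_lt tau t) as [h|h].
  - apply (interval_connected_fwd Q a b tau); auto; lra.
  - replace t with (- - t) by ring.
    assert (Hneg : forall u s, Rabs (- u - - s) = Rabs (u - s))
      by (intros; replace (- u - - s) with (- (u - s)) by ring; apply Rabs_Ropp).
    apply (interval_connected_fwd (fun s => Q (- s)) (-b) (-a) (-tau)); try lra.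
    + intros s Hs Qs. destruct (Hop (-s) ltac:(lra) Qs) as [del [Hd Hq]]. exists del; split; auto.
      intros u Hu. apply Hq. rewrite Hneg; auto.
    + intros s Hs H. apply Hcl; [lra|]. intros del Hd. destruct (H del Hd) as [u [Hu Qu]].
      exists (-u). split; auto. rewrite Hneg; auto.
    + rewrite Ropp_involutive; auto.
Qed.

(** * Local theory of a planar system *)

(* Contraction: on a window where [L * del <= 1/4], the distance between the two solutions is at
   most a quarter of its supremum. *)
Lemma unique_on_short_window (F1 F2 : R -> R -> R) (X Y X' Y' : R -> R) t1 r L del :
  0 <= L -> L * del <= / 4 ->
  lipschitz_on_box F1 (X t1) (Y t1) r L -> lipschitz_on_box F2 (X t1) (Y t1) r L ->
  (forall t, Rabs (t - t1) <= del ->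
     derivable_pt_lim X t (F1 (X t) (Y t)) /\ derivable_pt_lim Y t (F2 (X t) (Y t)) /\
     derivable_pt_lim X' t (F1 (X' t) (Y' t)) /\ derivable_pt_lim Y' t (F2 (X' t) (Y' t)) /\
     in_box (X t1) (Y t1) r (X t) (Y t) /\ in_box (X t1) (Y t1) r (X' t) (Y' t)) ->
  X' t1 = X t1 -> Y' t1 = Y t1 ->
  forall t, Rabs (t - t1) <= del -> X t = X' t /\ Y t = Y' t.
Proof.
  intros HL HLdel HF1 HF2 Hw EX EY.
  set (D t := Rabs (X t - X' t) + Rabs (Y t - Y' t)).
  assert (HD : forall n t, Rabs (t - t1) <= del -> D t <= 4 * r * (/2)^n).
  { induction n as [|n IH]; intros t Ht.
    - destruct (Hw t Ht) as [_ [_ [_ [_ [[A B] [A' B']]]]]]. unfold D. simpl.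
      pose proof (Rabs_dist_triang (X t) (X t1) (X' t)). pose proof (Rabs_dist_triang (Y t) (Y t1) (Y' t)).
      rewrite (Rabs_minus_sym (X t1)) in *. rewrite (Rabs_minus_sym (Y t1)) in *. lra.
    - assert (Hr : 0 <= r * (/2)^n).
      { destruct (Hw t Ht) as [_ [_ [_ [_ [[A _] _]]]]].
        pose proof (Rabs_pos (X t - X t1)). apply Rmult_le_pos; [lra|apply pow_le; lra]. }
      assert (Hstep : forall (G : R -> R -> R) (V V' : R -> R),
        (forall c, Rabs (c - t1) <= del -> derivable_pt_lim V c (G (X c) (Y c)) /\
                                           derivable_pt_lim V' c (G (X' c) (Y' c))) ->
        V t1 = V' t1 -> lipschitz_on_box G (X t1) (Y t1) r L ->
        Rabs (V t - V' t) <= r * (/2)^n).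
      { intros G V V' HG E0 HGL.
        assert (Hm := mean_value_bound (fun s => V s - V' s) (fun c => G (X c) (Y c) - G (X' c) (Y' c))
                        t1 t (L * (4 * r * (/2)^n))).
        cbv beta in Hm. rewrite E0, Rminus_diag, Rminus_0_r in Hm.
        eapply Rle_trans; [apply Hm|].
        - intros c Hc. pose proof (between_dist_le t1 t c del Ht Hc) as Hcd.
          destruct (HG c Hcd). split; [apply derivable_pt_lim_minus; auto|].
          destruct (Hw c Hcd) as [_ [_ [_ [_ [I1 I2]]]]].
          eapply Rle_trans; [apply HGL; auto|]. apply Rmult_le_compat_l; [lra|apply IH; auto].
        - apply Rle_trans with (L * del * (4 * r * (/2)^n)).
          + replace (L * del * (4 * r * (/2)^n)) with (L * (4 * r * (/2)^n) * del) by ring.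
            apply Rmult_le_compat_l; [nra|lra].
          + replace (r * (/2)^n) with (/4 * (4 * r * (/2)^n)) by field.
            apply Rmult_le_compat_r; lra. }
      assert (A1 : Rabs (X t - X' t) <= r * (/2)^n).
      { apply (Hstep F1); auto. intros c Hc. destruct (Hw c Hc) as [? [_ [? _]]]. auto. }
      assert (A2 : Rabs (Y t - Y' t) <= r * (/2)^n).
      { apply (Hstep F2); auto. intros c Hc. destruct (Hw c Hc) as [_ [? [_ [? _]]]]. auto. }
      unfold D. simpl. lra. }
  intros t Ht.
  assert (D t <= 0) by (apply (le_of_le_geom_half _ 0 (4 * r)); intros n; rewrite Rplus_0_l; auto).
  unfold D in H. pose proof (Rabs_pos (X t - X' t)). pose proof (Rabs_pos (Y t - Y' t)).
  split; apply Rminus_diag_uniq, Rabs_eq_0; lra.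
Qed.

Lemma lipschitz_limit_right (X : R -> R) a b M :
  a < b -> 0 <= M -> (forall s t, a < s < b -> a < t < b -> Rabs (X s - X t) <= M * Rabs (s - t)) ->
  exists l, forall t, a < t < b -> Rabs (X t - l) <= M * (b - t).
Proof.
  intros Hab HM Hlip.
  set (c n := b - (b - a) * (/2)^(S n)).
  assert (Hq : forall n, 0 < (/2)^(S n) <= (/2)^n /\ (/2)^(S n) <= / 2).
  { intros n. split; [split; [apply pow_lt; lra|apply pow_half_le; lia]|].
    replace (/2) with ((/2)^1) at 2 by (simpl; lra). apply pow_half_le; lia. }
  assert (Hc : forall n, a < c n < b) by (intros n; destruct (Hq n) as [[? ?] ?]; unfold c; split; nra).
  assert (Hcd : forall n m, (n <= m)%nat -> Rabs (c m - c n) <= (b - a) * (/2)^n).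
  { intros n m Hnm. unfold c. destruct (Hq n) as [[? ?] _]. destruct (Hq m) as [[? ?] _].
    assert ((/2)^(S m) <= (/2)^(S n)) by (apply pow_half_le; lia).
    unfold Rabs; destruct Rcase_abs; nra. }
  destruct (cauchy_limit (fun n => X (c n)) (fun n => (M * (b - a)) * (/2)^n)) as [l Hl].
  { apply geom_half_cv. }
  { intros n m Hnm. cbv beta. rewrite Rmult_assoc. eapply Rle_trans; [apply Hlip; apply Hc|].
    apply Rmult_le_compat_l; auto. }
  exists l. intros t Ht.
  apply (le_of_le_geom_half _ _ (2 * (M * (b - a)))). intros n.
  pose proof (Hlip t (c n) Ht (Hc n)). pose proof (Hl n) as B. cbv beta in B.
  pose proof (Rabs_dist_triang (X t) (X (c n)) l). rewrite Rabs_minus_sym in B.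
  assert (Rabs (t - c n) <= (b - t) + (b - a) * (/2)^n).
  { destruct (Hq n) as [[? ?] _]. destruct (Hc n). unfold c in *. unfold Rabs; destruct Rcase_abs; nra. }
  assert (M * Rabs (t - c n) <= M * ((b - t) + (b - a) * (/2)^n)) by (apply Rmult_le_compat_l; auto).
  lra.
Qed.

Definition closed_plane_set (K : R -> R -> Prop) : Prop :=
  forall q1 q2, (forall eps, 0 < eps -> exists k1 k2, K k1 k2 /\ Rabs (k1 - q1) <= eps /\ Rabs (k2 - q2) <= eps) ->
    K q1 q2.

Lemma lipschitz_curve_limit_right (X Y : R -> R) (K : R -> R -> Prop) a b M :
  a < b -> 0 <= M -> closed_plane_set K -> (forall t, a < t < b -> K (X t) (Y t)) ->
  (forall s t, a < s < b -> a < t < b ->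
     Rabs (X s - X t) <= M * Rabs (s - t) /\ Rabs (Y s - Y t) <= M * Rabs (s - t)) ->
  exists l1 l2, K l1 l2 /\ forall t, a < t < b -> Rabs (X t - l1) <= M * (b - t) /\ Rabs (Y t - l2) <= M * (b - t).
Proof.
  intros Hab HM HK HXK Hlip.
  destruct (lipschitz_limit_right X a b M) as [l1 Hl1]; auto; [intros; apply Hlip; auto|].
  destruct (lipschitz_limit_right Y a b M) as [l2 Hl2]; auto; [intros; apply Hlip; auto|].
  exists l1, l2. split; [|split; auto].
  apply HK. intros eps Heps.
  set (t := Rmax ((a + b) / 2) (b - eps / (M + 1))).
  assert (0 < eps / (M + 1)) by (apply Rdiv_lt_0_compat; lra).
  assert (Ht : a < t < b) by (unfold t, Rmax; destruct Rle_dec; lra).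
  assert (HMt : M * (b - t) <= eps).
  { apply Rle_trans with (M * (eps / (M + 1))).
    - apply Rmult_le_compat_l; auto. unfold t, Rmax; destruct Rle_dec; lra.
    - apply Rmult_le_reg_r with (M + 1); [lra|]. field_simplify; nra. }
  exists (X t), (Y t). split; auto. split; [specialize (Hl1 t Ht)|specialize (Hl2 t Ht)]; lra.
Qed.

Section planar_system.

Variables (F1 F2 : R -> R -> R) (U : R -> R -> Prop).

Definition locally_lipschitz : Prop :=
  forall p1 p2, U p1 p2 -> exists r L, 0 < r /\ 0 <= L /\
    lipschitz_on_box F1 p1 p2 r L /\ lipschitz_on_box F2 p1 p2 r L /\
    (forall q1 q2, in_box p1 p2 r q1 q2 -> U q1 q2).

Definition solves_on (a b : R) (X Y : R -> R) : Prop :=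
  forall t, a < t < b -> derivable_pt_lim X t (F1 (X t) (Y t)) /\
    derivable_pt_lim Y t (F2 (X t) (Y t)) /\ U (X t) (Y t).

Hypothesis F_loclip : locally_lipschitz.

Lemma solves_on_sub a b a' b' X Y :
  a <= a' -> b' <= b -> solves_on a b X Y -> solves_on a' b' X Y.
Proof. intros H1 H2 HS t Ht. apply HS. lra. Qed.

Lemma solves_on_ext a b X Y Z V :
  solves_on a b X Y -> (forall t, a < t < b -> Z t = X t /\ V t = Y t) -> solves_on a b Z V.
Proof.
  intros HS Heq t Ht. destruct (HS t Ht) as [dX [dY HU]].
  assert (Hd : 0 < Rmin (t - a) (b - t)) by (apply Rmin_pos; lra).
  assert (Hl : forall u, Rabs (u - t) < Rmin (t - a) (b - t) -> a < u < b).
  { intros u Hu. pose proof (Rmin_l (t - a) (b - t)). pose proof (Rmin_r (t - a) (b - t)).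
    unfold Rabs in Hu; destruct Rcase_abs in Hu; split; lra. }
  destruct (Heq t Ht) as [-> ->]. split; [|split]; auto.
  - apply (derivable_pt_lim_locally_eq X Z t _ _ Hd); auto. intros u Hu. symmetry. apply (Heq u (Hl u Hu)).
  - apply (derivable_pt_lim_locally_eq Y V t _ _ Hd); auto. intros u Hu. symmetry. apply (Heq u (Hl u Hu)).
Qed.

Lemma solutions_agree_near a b X Y X' Y' t1 :
  solves_on a b X Y -> solves_on a b X' Y' -> a < t1 < b ->
  X t1 = X' t1 -> Y t1 = Y' t1 ->
  exists del, 0 < del /\ forall t, Rabs (t - t1) < del -> X t = X' t /\ Y t = Y' t.
Proof.
  intros HS HS' Ht1 EX EY.
  destruct (HS t1 Ht1) as [dX [dY HU]]. destruct (HS' t1 Ht1) as [dX' [dY' _]].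
  destruct (F_loclip _ _ HU) as [r [L [Hr [HL [HF1 [HF2 _]]]]]].
  destruct (derivable_pt_lim_eps_delta _ _ _ dX r Hr) as [e1 [He1 C1]].
  destruct (derivable_pt_lim_eps_delta _ _ _ dY r Hr) as [e2 [He2 C2]].
  destruct (derivable_pt_lim_eps_delta _ _ _ dX' r Hr) as [e3 [He3 C3]].
  destruct (derivable_pt_lim_eps_delta _ _ _ dY' r Hr) as [e4 [He4 C4]].
  assert (HLr : 0 < / (4 * (L + 1))) by (apply Rinv_0_lt_compat; lra).
  destruct (exists_pos_below _ _ He1 He2) as [d1 [Hd1 [? ?]]].
  destruct (exists_pos_below _ _ He3 He4) as [d2 [Hd2 [? ?]]].
  destruct (exists_pos_below (t1 - a) (b - t1) ltac:(lra) ltac:(lra)) as [d3 [Hd3 [? ?]]].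
  destruct (exists_pos_below _ _ Hd1 Hd2) as [d4 [Hd4 [? ?]]].
  destruct (exists_pos_below _ _ Hd3 HLr) as [d5 [Hd5 [? ?]]].
  destruct (exists_pos_below _ _ Hd4 Hd5) as [del0 [Hdel0 [? ?]]].
  exists (del0 / 2). split; [lra|]. intros t Ht.
  assert (HLdel : L * (del0 / 2) <= / 4).
  { apply Rle_trans with (L * / (4 * (L + 1))); [apply Rmult_le_compat_l; lra|].
    apply Rmult_le_reg_r with (4 * (L + 1)); [lra|]. field_simplify; lra. }
  apply (unique_on_short_window F1 F2 X Y X' Y' t1 r L (del0 / 2)); auto; [|lra].
  intros s Hs.
  assert (Hab : a < s < b) by (unfold Rabs in Hs; destruct Rcase_abs in Hs; split; lra).
  destruct (HS s Hab) as [? [? _]]. destruct (HS' s Hab) as [? [? _]].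
  specialize (C1 s ltac:(lra)). specialize (C2 s ltac:(lra)).
  specialize (C3 s ltac:(lra)). specialize (C4 s ltac:(lra)).
  rewrite <- EX in C3. rewrite <- EY in C4. unfold in_box. repeat split; auto; lra.
Qed.

Lemma solutions_agree a b X Y X' Y' tau :
  solves_on a b X Y -> solves_on a b X' Y' -> a < tau < b ->
  X tau = X' tau -> Y tau = Y' tau ->
  forall t, a < t < b -> X t = X' t /\ Y t = Y' t.
Proof.
  intros HS HS' Htau EX EY.
  apply (interval_connected (fun t => X t = X' t /\ Y t = Y' t) a b tau); auto.
  - intros t Ht [E1 E2]. apply (solutions_agree_near a b X Y X' Y' t); auto.
  - intros t Ht H. destruct (HS t Ht) as [dX [dY _]]. destruct (HS' t Ht) as [dX' [dY' _]].
    split; [apply (eq_of_frequently_eq X X' t _ _ dX dX')|apply (eq_of_frequently_eq Y Y' t _ _ dY dY')];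
      intros del Hdel; destruct (H del Hdel) as [u [Hu [E1 E2]]]; eauto.
Qed.

Lemma solutions_glue a b c d X Y X' Y' :
  solves_on a b X Y -> solves_on c d X' Y' -> a < c -> c < b -> b < d ->
  (forall t, c < t < b -> X t = X' t /\ Y t = Y' t) ->
  exists Z V, solves_on a d Z V /\ (forall t, a < t < b -> Z t = X t /\ V t = Y t) /\
    (forall t, c < t < d -> Z t = X' t /\ V t = Y' t).
Proof.
  intros HS HS' H1 H2 H3 Heq.
  set (m := (c + b) / 2).
  exists (fun t => if Rlt_dec t m then X t else X' t), (fun t => if Rlt_dec t m then Y t else Y' t).
  assert (A : forall t, a < t < b -> (if Rlt_dec t m then X t else X' t) = X t /\
                                      (if Rlt_dec t m then Y t else Y' t) = Y t).
  { intros t Ht. destruct Rlt_dec; [auto|]. destruct (Heq t); [unfold m in *; lra|]. split; auto. }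
  assert (B : forall t, c < t < d -> (if Rlt_dec t m then X t else X' t) = X' t /\
                                      (if Rlt_dec t m then Y t else Y' t) = Y' t).
  { intros t Ht. destruct Rlt_dec; [|auto]. apply Heq. unfold m in *; lra. }
  split; [|split]; auto.
  intros t Ht. destruct (Rlt_or_le t b) as [h|h].
  - apply (solves_on_ext a b X Y _ _ HS A). lra.
  - apply (solves_on_ext c d X' Y' _ _ HS' B). lra.
Qed.

Lemma solution_extend_right a b t1 h X Y Z V :
  solves_on a b X Y -> solves_on (t1 - h) (t1 + h) Z V -> a < t1 < b -> b < t1 + h ->
  Z t1 = X t1 -> V t1 = Y t1 ->
  exists W Q, solves_on a (t1 + h) W Q /\ forall t, a < t < b -> W t = X t /\ Q t = Y t.
Proof.
  intros HS HZ Ht1 Hb E1 E2.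
  set (c := (Rmax a (t1 - h) + t1) / 2).
  assert (Hc : a < c /\ t1 - h < c /\ c < t1).
  { unfold c, Rmax; destruct Rle_dec; lra. }
  destruct (solutions_glue a b c (t1 + h) X Y Z V) as [W [Q [HW [HWa _]]]]; auto; try lra.
  - apply (solves_on_sub (t1 - h) (t1 + h)); auto; lra.
  - apply (solutions_agree c b X Y Z V t1); auto; try lra.
    + apply (solves_on_sub a b); auto; lra.
    + apply (solves_on_sub (t1 - h) (t1 + h)); auto; lra.
  - exists W, Q. auto.
Qed.

Lemma solution_extend_left a b t1 h X Y Z V :
  solves_on a b X Y -> solves_on (t1 - h) (t1 + h) Z V -> a < t1 < b -> t1 - h < a ->
  Z t1 = X t1 -> V t1 = Y t1 ->
  exists W Q, solves_on (t1 - h) b W Q /\ forall t, a < t < b -> W t = X t /\ Q t = Y t.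
Proof.
  intros HS HZ Ht1 Ha E1 E2.
  set (c := (Rmin b (t1 + h) + t1) / 2).
  assert (Hc : c < b /\ c < t1 + h /\ t1 < c).
  { unfold c, Rmin; destruct Rle_dec; lra. }
  destruct (solutions_glue (t1 - h) c a b Z V X Y) as [W [Q [HW [_ HWb]]]]; auto; try lra.
  - apply (solves_on_sub (t1 - h) (t1 + h)); auto; lra.
  - apply (solutions_agree a c Z V X Y t1); auto; try lra.
    + apply (solves_on_sub (t1 - h) (t1 + h)); auto; lra.
    + apply (solves_on_sub a b); auto; lra.
  - exists W, Q. auto.
Qed.

(* Picard iteration around [q] on the box of half the Lipschitz radius, which lies in the box
   around [p]. *)
Lemma local_existence_uniform p1 p2 : U p1 p2 ->
  exists rho h, 0 < rho /\ 0 < h /\ forall q1 q2 t0, Rabs (q1 - p1) <= rho -> Rabs (q2 - p2) <= rho ->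
    exists X Y, X t0 = q1 /\ Y t0 = q2 /\ solves_on (t0 - h) (t0 + h) X Y.
Proof.
  intros HU. destruct (F_loclip _ _ HU) as [r [L [Hr [HL [HF1 [HF2 HUb]]]]]].
  set (M := Rabs (F1 p1 p2) + Rabs (F2 p1 p2) + L * (2 * r)).
  assert (HM : 0 <= M) by (unfold M; pose proof (Rabs_pos (F1 p1 p2)); pose proof (Rabs_pos (F2 p1 p2)); nra).
  set (h := Rmin (r / 2 / (M + 1)) (/ (4 * (L + 1)))).
  assert (Hh : 0 < h) by (apply Rmin_pos; [apply Rdiv_lt_0_compat; lra|apply Rinv_0_lt_compat; lra]).
  exists (r / 2), h. split; [lra|split; auto].
  intros q1 q2 t0 E1 E2.
  assert (Hsub : forall z1 z2, in_box q1 q2 (r / 2) z1 z2 -> in_box p1 p2 r z1 z2)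
    by (intros; apply (in_box_recenter p1 p2 r q1 q2 (r / 2)); auto; lra).
  assert (Hlip : forall f, lipschitz_on_box f p1 p2 r L -> lipschitz_on_box f q1 q2 (r / 2) L)
    by (intros f Hf z1 z2 z1' z2' Hz Hz'; apply Hf; auto).
  assert (Hbnd : forall f, lipschitz_on_box f p1 p2 r L -> Rabs (f p1 p2) <= Rabs (F1 p1 p2) + Rabs (F2 p1 p2) ->
                   bounded_on_box f q1 q2 (r / 2) M).
  { intros f Hf Hfp z1 z2 Hz. pose proof (bounded_on_box_of_lipschitz f p1 p2 r L HL ltac:(lra) Hf z1 z2 (Hsub _ _ Hz)).
    unfold M. lra. }
  assert (HhM : h * M <= r / 2).
  { apply Rle_trans with (r / 2 / (M + 1) * M); [apply Rmult_le_compat_r; [lra|apply Rmin_l]|].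
    apply Rmult_le_reg_r with (M + 1); [lra|]. field_simplify; nra. }
  assert (HhL : 4 * h * L <= 1).
  { apply Rle_trans with (4 * / (4 * (L + 1)) * L).
    - apply Rmult_le_compat_r; [lra|]. apply Rmult_le_compat_l; [lra|apply Rmin_r].
    - apply Rmult_le_reg_r with (L + 1); [lra|]. field_simplify; lra. }
  destruct (picard_local_solution F1 F2 q1 q2 (r / 2) L M t0 h (Hlip _ HF1) (Hlip _ HF2))
    as [X [Y [EX [EY [Hin Hd]]]]]; auto.
  - apply Hbnd; auto. pose proof (Rabs_pos (F2 p1 p2)). lra.
  - apply Hbnd; auto. pose proof (Rabs_pos (F1 p1 p2)). lra.
  - exists X, Y. split; [|split]; auto.
    intros t Ht. destruct (Hd t Ht). split; [|split]; auto.
Qed.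

Lemma solution_of_exhaustion p1 p2 (c : nat -> R) :
  (forall n, 0 < c n) ->
  (forall n, exists X Y, solves_on (- c n) (c n) X Y /\ X 0 = p1 /\ Y 0 = p2) ->
  exists X Y, X 0 = p1 /\ Y 0 = p2 /\ forall t n, Rabs t < c n ->
    derivable_pt_lim X t (F1 (X t) (Y t)) /\ derivable_pt_lim Y t (F2 (X t) (Y t)) /\ U (X t) (Y t).
Proof.
  intros Hc Hex.
  assert (Hs : forall n, {XY : (R -> R) * (R -> R) |
    solves_on (- c n) (c n) (fst XY) (snd XY) /\ fst XY 0 = p1 /\ snd XY 0 = p2}).
  { intros n. apply constructive_indefinite_description. destruct (Hex n) as [X [Y H]]. exists (X, Y). exact H. }
  set (XY n := proj1_sig (Hs n)).
  assert (HXY : forall n, solves_on (- c n) (c n) (fst (XY n)) (snd (XY n)) /\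
                          fst (XY n) 0 = p1 /\ snd (XY n) 0 = p2)
    by (intro n; apply (proj2_sig (Hs n))).
  clearbody XY.
  assert (Hcons : forall n k t, Rabs t < c n -> Rabs t < c k ->
                    fst (XY n) t = fst (XY k) t /\ snd (XY n) t = snd (XY k) t).
  { intros n k t Hn Hk. set (m := Rmin (c n) (c k)).
    pose proof (Rmin_l (c n) (c k)). pose proof (Rmin_r (c n) (c k)). pose proof (Hc n). pose proof (Hc k).
    destruct (HXY n) as [Sn [En1 En2]]. destruct (HXY k) as [Sk [Ek1 Ek2]].
    apply (solutions_agree (- m) m _ _ _ _ 0); try congruence.
    - apply (solves_on_sub (- c n) (c n)); auto; unfold m; lra.
    - apply (solves_on_sub (- c k) (c k)); auto; unfold m; lra.
    - unfold m, Rmin. destruct Rle_dec; lra.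
    - unfold m, Rmin. destruct Rle_dec; unfold Rabs in *; destruct Rcase_abs; split; lra. }
  set (index t := match excluded_middle_informative (exists n, Rabs t < c n) with
                  | left H => proj1_sig (constructive_indefinite_description _ H) | right _ => O end).
  assert (Hindex : forall t n, Rabs t < c n -> Rabs t < c (index t)).
  { intros t n Hn. unfold index. destruct excluded_middle_informative as [H|H].
    - apply (proj2_sig (constructive_indefinite_description _ H)).
    - exfalso; apply H; exists n; auto. }
  clearbody index.
  exists (fun t => fst (XY (index t)) t), (fun t => snd (XY (index t)) t).
  split; [apply (HXY (index 0))|split; [apply (HXY (index 0))|]].
  intros t n Ht.
  assert (Hloc : forall u, - c n < u < c n ->
            fst (XY (index u)) u = fst (XY n) u /\ snd (XY (index u)) u = snd (XY n) u).
  { intros u Hu. assert (Rabs u < c n) by (unfold Rabs; destruct Rcase_abs; lra).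
    apply Hcons; auto. eapply Hindex; eauto. }
  apply (solves_on_ext (- c n) (c n) _ _ _ _ (proj1 (HXY n)) Hloc).
  unfold Rabs in Ht; destruct Rcase_abs in Ht; split; lra.
Qed.

Lemma solves_on_speed_lipschitz a b X Y M :
  solves_on a b X Y ->
  (forall t, a < t < b -> Rabs (F1 (X t) (Y t)) <= M /\ Rabs (F2 (X t) (Y t)) <= M) ->
  forall s t, a < s < b -> a < t < b ->
    Rabs (X s - X t) <= M * Rabs (s - t) /\ Rabs (Y s - Y t) <= M * Rabs (s - t).
Proof.
  intros HS HM s t Hs Ht.
  split; [apply (mean_value_bound _ (fun c => F1 (X c) (Y c)))|apply (mean_value_bound _ (fun c => F2 (X c) (Y c)))];
    intros c Hc;
    pose proof (between_in_interval a b t s c Ht Hs Hc) as Hab;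
    destruct (HS c Hab) as [? [? _]]; destruct (HM c Hab); auto.
Qed.

Definition a_priori_bounded (p1 p2 : R) : Prop :=
  forall T, 0 < T -> exists M (K : R -> R -> Prop), 0 <= M /\ (forall q1 q2, K q1 q2 -> U q1 q2) /\
    closed_plane_set K /\
    forall a X Y, 0 < a <= T -> solves_on (- a) a X Y -> X 0 = p1 -> Y 0 = p2 ->
      forall t, - a < t < a ->
        K (X t) (Y t) /\ Rabs (F1 (X t) (Y t)) <= M /\ Rabs (F2 (X t) (Y t)) <= M.

(* A solution confined to a closed subset [K] of [U] with bounded speed has limits in [K] at both
   ends of its interval, and the local solutions through these limits continue it. *)
Lemma solution_extends S M (K : R -> R -> Prop) X Y :
  0 < S -> 0 <= M -> (forall q1 q2, K q1 q2 -> U q1 q2) -> closed_plane_set K ->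
  solves_on (- S) S X Y ->
  (forall t, - S < t < S -> K (X t) (Y t) /\ Rabs (F1 (X t) (Y t)) <= M /\ Rabs (F2 (X t) (Y t)) <= M) ->
  exists eta W Q, 0 < eta /\ solves_on (- (S + eta)) (S + eta) W Q /\ W 0 = X 0 /\ Q 0 = Y 0.
Proof.
  intros HS HM HKU HK HX HXK.
  pose proof (solves_on_speed_lipschitz (- S) S X Y M HX (fun t Ht => proj2 (HXK t Ht))) as Hlip.
  assert (HSS : - S < S) by lra.
  destruct (lipschitz_curve_limit_right X Y K (- S) S M HSS HM HK) as [l1 [l2 [Kl Hl]]];
    [intros t Ht; apply HXK, Ht|exact Hlip|].
  destruct (lipschitz_curve_limit_right (fun t => X (- t)) (fun t => Y (- t)) K (- S) S M HSS HM HK)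
    as [m1 [m2 [Km Hm]]]; [intros t Ht; apply HXK; lra| |].
  { intros s t Hs Ht. replace (s - t) with (- (- s - - t)) by ring. rewrite Rabs_Ropp. apply Hlip; lra. }
  destruct (local_existence_uniform l1 l2 (HKU _ _ Kl)) as [rho1 [h1 [Hrho1 [Hh1 Hext1]]]].
  destruct (local_existence_uniform m1 m2 (HKU _ _ Km)) as [rho2 [h2 [Hrho2 [Hh2 Hext2]]]].
  destruct (exists_pos_below (S / 2) (rho1 / (M + 1))) as [e1 [He1 [? ?]]];
    [lra|apply Rdiv_lt_0_compat; lra|].
  destruct (exists_pos_below (rho2 / (M + 1)) (h1 / 2)) as [e2 [He2 [? ?]]];
    [apply Rdiv_lt_0_compat; lra|lra|].
  destruct (exists_pos_below e1 e2 He1 He2) as [e3 [He3 [? ?]]].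
  destruct (exists_pos_below e3 (h2 / 2) He3 ltac:(lra)) as [eta [Heta [? ?]]].
  assert (HMrho : forall rho, 0 < rho -> eta <= rho / (M + 1) -> M * eta <= rho).
  { intros rho Hrho He. apply Rle_trans with (M * (rho / (M + 1))); [apply Rmult_le_compat_l; lra|].
    apply Rmult_le_reg_r with (M + 1); [lra|]. field_simplify; nra. }
  set (t1 := S - eta). assert (Et1 : t1 = S - eta) by reflexivity. clearbody t1.
  destruct (Hl t1 ltac:(lra)) as [Dr1 Dr2]. replace (S - t1) with eta in Dr1, Dr2 by lra.
  destruct (Hext1 (X t1) (Y t1) t1) as [Z1 [V1 [EZ1 [EV1 HZ1]]]];
    [pose proof (HMrho rho1 Hrho1 ltac:(lra)); lra..|].
  destruct (solution_extend_right (- S) S t1 h1 X Y Z1 V1) as [W1 [Q1 [HW1 HW1X]]]; auto;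
    try lra.
  destruct (Hm t1 ltac:(lra)) as [Dl1 Dl2]. replace (S - t1) with eta in Dl1, Dl2 by lra.
  destruct (Hext2 (X (- t1)) (Y (- t1)) (- t1)) as [Z2 [V2 [EZ2 [EV2 HZ2]]]];
    [pose proof (HMrho rho2 Hrho2 ltac:(lra)); lra..|].
  destruct (HW1X (- t1) ltac:(lra)) as [EW1 EQ1].
  destruct (solution_extend_left (- S) (t1 + h1) (- t1) h2 W1 Q1 Z2 V2) as [W [Q [HW HWW1]]];
    auto; try lra; try congruence.
  exists eta, W, Q. split; auto. split.
  - apply (solves_on_sub (- t1 - h2) (t1 + h1)); auto; lra.
  - destruct (HWW1 0 ltac:(lra)) as [-> ->]. apply HW1X. lra.
Qed.

Lemma solution_on_every_interval p1 p2 :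
  U p1 p2 -> a_priori_bounded p1 p2 ->
  forall T, 0 < T -> exists X Y, solves_on (- T) T X Y /\ X 0 = p1 /\ Y 0 = p2.
Proof.
  intros HU AP T HT.
  set (A a := 0 < a <= T /\ exists X Y, solves_on (- a) a X Y /\ X 0 = p1 /\ Y 0 = p2).
  assert (Hsub : forall a a', 0 < a' <= a -> A a -> A a').
  { intros a a' Ha' [Ha [X [Y [HX E]]]]. split; [lra|]. exists X, Y. split; auto.
    apply (solves_on_sub (- a) a); auto; lra. }
  destruct (local_existence_uniform p1 p2 HU) as [rho0 [h0 [Hrho0 [Hh0 Hext0]]]].
  assert (HA0 : A (Rmin h0 T)).
  { pose proof (Rmin_l h0 T). pose proof (Rmin_r h0 T). pose proof (Rmin_pos h0 T Hh0 HT).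
    destruct (Hext0 p1 p2 0) as [X [Y [E1 [E2 HS]]]]; try (rewrite Rminus_diag, Rabs_R0; lra).
    split; [lra|]. exists X, Y. split; auto. apply (solves_on_sub (0 - h0) (0 + h0)); auto; lra. }
  assert (Hb : bound A) by (exists T; intros a [[_ Ha] _]; auto).
  destruct (completeness A Hb (ex_intro _ _ HA0)) as [s [Hub Hlub]].
  assert (Hs : 0 < s) by (pose proof (Hub _ HA0); pose proof (Rmin_pos h0 T Hh0 HT); lra).
  assert (HST : s <= T) by (apply Hlub; intros a [[_ Ha] _]; auto).
  assert (Hsol : exists X Y, solves_on (- s) s X Y /\ X 0 = p1 /\ Y 0 = p2).
  { set (c n := s - s * (/2)^(S n)).
    assert (Hc : forall n, 0 < c n < s).
    { intros n. unfold c. assert (0 < (/2)^(S n)) by (apply pow_lt; lra).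
      assert ((/2)^(S n) <= /2) by (replace (/2) with ((/2)^1) at 2 by (simpl; lra); apply pow_half_le; lia).
      split; nra. }
    destruct (solution_of_exhaustion p1 p2 c) as [X [Y [E1 [E2 HX]]]]; [intros n; apply Hc| |].
    - intros n. destruct (classic (exists a, A a /\ c n < a)) as [[a [Ha Hca]]|Hno].
      + destruct (Hsub a (c n) ltac:(destruct (Hc n); lra) Ha) as [_ HXY]. exact HXY.
      + exfalso. assert (s <= c n); [|destruct (Hc n); lra].
        apply Hlub. intros a Ha. destruct (Rle_or_lt a (c n)); auto. exfalso; apply Hno; exists a; auto.
    - exists X, Y. split; [|split]; auto. intros t Ht.
      destruct (geom_half_le s (s - Rabs t)) as [n Hn]; [unfold Rabs; destruct Rcase_abs; lra|].
      apply (HX t n). unfold c. assert (0 < (/2)^n) by (apply pow_lt; lra).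
      simpl pow. nra. }
  destruct (Rle_lt_or_eq_dec s T HST) as [Hlt|<-]; [exfalso|auto].
  destruct Hsol as [X [Y [HX [E1 E2]]]].
  destruct (AP T HT) as [M [K [HM [HKU [HK HXK]]]]].
  destruct (solution_extends s M K X Y Hs HM HKU HK HX (HXK s X Y ltac:(lra) HX E1 E2))
    as [eta [W [Q [Heta [HW [EW EQ]]]]]].
  assert (HA : A (Rmin (s + eta) T)).
  { pose proof (Rmin_l (s + eta) T). pose proof (Rmin_r (s + eta) T).
    split; [split; [apply Rmin_pos|]; lra|]. exists W, Q. split; [|split; congruence].
    apply (solves_on_sub (- (s + eta)) (s + eta)); auto; lra. }
  pose proof (Hub _ HA). unfold Rmin in H. destruct Rle_dec in H; lra.
Qed.

Lemma global_solution_exists p1 p2 :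
  U p1 p2 -> a_priori_bounded p1 p2 ->
  exists X Y, X 0 = p1 /\ Y 0 = p2 /\ forall t,
    derivable_pt_lim X t (F1 (X t) (Y t)) /\ derivable_pt_lim Y t (F2 (X t) (Y t)) /\ U (X t) (Y t).
Proof.
  intros HU AP.
  destruct (solution_of_exhaustion p1 p2 (fun n => INR n + 1)) as [X [Y [E1 [E2 H]]]].
  - intros n. pose proof (pos_INR n). lra.
  - intros n. apply (solution_on_every_interval p1 p2 HU AP). pose proof (pos_INR n). lra.
  - exists X, Y. split; [|split]; auto. intros t.
    destruct (INR_unbounded (Rabs t)) as [n Hn]. apply (H t n). lra.
Qed.

Lemma global_solution_unique X Y X' Y' :
  (forall t, derivable_pt_lim X t (F1 (X t) (Y t)) /\ derivable_pt_lim Y t (F2 (X t) (Y t)) /\ U (X t) (Y t)) ->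
  (forall t, derivable_pt_lim X' t (F1 (X' t) (Y' t)) /\ derivable_pt_lim Y' t (F2 (X' t) (Y' t)) /\
             U (X' t) (Y' t)) ->
  X 0 = X' 0 -> Y 0 = Y' 0 -> forall t, X t = X' t /\ Y t = Y' t.
Proof.
  intros H H' E1 E2 t. pose proof (Rabs_pos t).
  apply (solutions_agree (- (Rabs t + 1)) (Rabs t + 1) X Y X' Y' 0); auto; try (intros s _; auto); try lra.
  unfold Rabs; destruct Rcase_abs; lra.
Qed.

Lemma continuous_along_solution X Y t :
  derivable_pt_lim X t (F1 (X t) (Y t)) -> derivable_pt_lim Y t (F2 (X t) (Y t)) -> U (X t) (Y t) ->
  continuity_pt (fun s => F1 (X s) (Y s)) t /\ continuity_pt (fun s => F2 (X s) (Y s)) t.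
Proof.
  intros dX dY HU.
  destruct (F_loclip _ _ HU) as [r [L [Hr [HL [HF1 [HF2 _]]]]]].
  assert (Key : forall f, lipschitz_on_box f (X t) (Y t) r L -> continuity_pt (fun s => f (X s) (Y s)) t).
  { intros f Hf. apply (proj2 (continuity_pt_filterlim (fun s => f (X s) (Y s)) t)), (continuous_of_eps_delta (fun s => f (X s) (Y s)) t).
    intros eps Heps.
    assert (He : 0 < Rmin r (eps / (2 * (L + 1)))) by (apply Rmin_pos; [lra|apply Rdiv_lt_0_compat; lra]).
    destruct (derivable_pt_lim_eps_delta _ _ _ dX _ He) as [d1 [Hd1 C1]].
    destruct (derivable_pt_lim_eps_delta _ _ _ dY _ He) as [d2 [Hd2 C2]].
    destruct (exists_pos_below _ _ Hd1 Hd2) as [del [Hdel [Ha Hb]]]. exists del. split; auto.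
    intros s Hs. specialize (C1 s ltac:(lra)). specialize (C2 s ltac:(lra)).
    pose proof (Rmin_l r (eps / (2 * (L + 1)))). pose proof (Rmin_r r (eps / (2 * (L + 1)))).
    assert (I1 : in_box (X t) (Y t) r (X s) (Y s)) by (split; lra).
    pose proof (Hf _ _ _ _ I1 (in_box_center (X t) (Y t) r ltac:(lra))).
    assert (L * (Rabs (X s - X t) + Rabs (Y s - Y t)) <= L * (2 * (eps / (2 * (L + 1)))))
      by (apply Rmult_le_compat_l; lra).
    assert (L * (2 * (eps / (2 * (L + 1)))) < eps) by (apply Rmult_lt_reg_r with (L + 1); [lra|]; field_simplify; lra).
    lra. }
  split; apply Key; auto.
Qed.
End planar_system.

(** * Local Lipschitz calculus *)

Definition lipschitz_near_pt (f : R -> R -> R) (p1 p2 : R) : Prop :=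
  exists r L, 0 < r /\ 0 <= L /\ lipschitz_on_box f p1 p2 r L.

Definition lipschitz_near (g : R -> R) (x : R) : Prop :=
  exists rho K, 0 < rho /\ 0 <= K /\
    forall a b, Rabs (a - x) <= rho -> Rabs (b - x) <= rho -> Rabs (g a - g b) <= K * Rabs (a - b).

Lemma lipschitz_on_box_weaken f p1 p2 r r' L L' :
  r' <= r -> L <= L' -> lipschitz_on_box f p1 p2 r L -> lipschitz_on_box f p1 p2 r' L'.
Proof.
  intros Hr HL H q1 q2 q1' q2' Hq Hq'. eapply Rle_trans; [apply H; eapply in_box_mono; eauto|].
  apply Rmult_le_compat_r; [pose proof (Rabs_pos (q1 - q1')); pose proof (Rabs_pos (q2 - q2')); lra|auto].
Qed.

Lemma lipschitz_near_pt_const c p1 p2 : lipschitz_near_pt (fun _ _ => c) p1 p2.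
Proof. exists 1, 0. split; [lra|split; [lra|]]. intros ? ? ? ? _ _. rewrite Rminus_diag, Rabs_R0. lra. Qed.

Lemma lipschitz_near_pt_fst p1 p2 : lipschitz_near_pt (fun a _ => a) p1 p2.
Proof. exists 1, 1. split; [lra|split; [lra|]]. intros q1 q2 q1' q2' _ _. pose proof (Rabs_pos (q2 - q2')). lra. Qed.

Lemma lipschitz_near_pt_snd p1 p2 : lipschitz_near_pt (fun _ b => b) p1 p2.
Proof. exists 1, 1. split; [lra|split; [lra|]]. intros q1 q2 q1' q2' _ _. pose proof (Rabs_pos (q1 - q1')). lra. Qed.

Lemma lipschitz_near_pt_plus f g p1 p2 :
  lipschitz_near_pt f p1 p2 -> lipschitz_near_pt g p1 p2 -> lipschitz_near_pt (fun a b => f a b + g a b) p1 p2.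
Proof.
  intros [r1 [L1 [Hr1 [HL1 H1]]]] [r2 [L2 [Hr2 [HL2 H2]]]].
  exists (Rmin r1 r2), (L1 + L2). split; [apply Rmin_pos; auto|split; [lra|]].
  intros q1 q2 q1' q2' Hq Hq'.
  pose proof (H1 q1 q2 q1' q2' (in_box_mono _ _ _ _ _ _ (Rmin_l r1 r2) Hq) (in_box_mono _ _ _ _ _ _ (Rmin_l r1 r2) Hq')).
  pose proof (H2 q1 q2 q1' q2' (in_box_mono _ _ _ _ _ _ (Rmin_r r1 r2) Hq) (in_box_mono _ _ _ _ _ _ (Rmin_r r1 r2) Hq')).
  replace (f q1 q2 + g q1 q2 - (f q1' q2' + g q1' q2')) with ((f q1 q2 - f q1' q2') + (g q1 q2 - g q1' q2')) by ring.
  pose proof (Rabs_triang (f q1 q2 - f q1' q2') (g q1 q2 - g q1' q2')). lra.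
Qed.

Lemma lipschitz_near_pt_opp f p1 p2 : lipschitz_near_pt f p1 p2 -> lipschitz_near_pt (fun a b => - f a b) p1 p2.
Proof.
  intros [r [L [Hr [HL H]]]]. exists r, L. split; auto. split; auto. intros q1 q2 q1' q2' Hq Hq'.
  replace (- f q1 q2 - - f q1' q2') with (- (f q1 q2 - f q1' q2')) by ring. rewrite Rabs_Ropp. auto.
Qed.

Lemma lipschitz_near_pt_minus f g p1 p2 :
  lipschitz_near_pt f p1 p2 -> lipschitz_near_pt g p1 p2 -> lipschitz_near_pt (fun a b => f a b - g a b) p1 p2.
Proof. intros. apply (lipschitz_near_pt_plus f (fun a b => - g a b)); auto. apply lipschitz_near_pt_opp; auto. Qed.

(* [f g - f' g' = f (g - g') + g' (f - f')], with [f] and [g'] bounded on the common box. *)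
Lemma lipschitz_near_pt_mult f g p1 p2 :
  lipschitz_near_pt f p1 p2 -> lipschitz_near_pt g p1 p2 -> lipschitz_near_pt (fun a b => f a b * g a b) p1 p2.
Proof.
  intros [r1 [L1 [Hr1 [HL1 H1]]]] [r2 [L2 [Hr2 [HL2 H2]]]].
  set (r := Rmin r1 r2). assert (Hr : 0 < r) by (apply Rmin_pos; auto).
  apply (lipschitz_on_box_weaken f p1 p2 r1 r L1 L1 (Rmin_l r1 r2) (Rle_refl L1)) in H1.
  apply (lipschitz_on_box_weaken g p1 p2 r2 r L2 L2 (Rmin_r r1 r2) (Rle_refl L2)) in H2.
  pose proof (bounded_on_box_of_lipschitz f p1 p2 r L1 HL1 ltac:(lra) H1) as Bf.
  pose proof (bounded_on_box_of_lipschitz g p1 p2 r L2 HL2 ltac:(lra) H2) as Bg.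
  set (Mf := Rabs (f p1 p2) + L1 * (2 * r)) in *. set (Mg := Rabs (g p1 p2) + L2 * (2 * r)) in *.
  assert (HMf : 0 <= Mf) by (unfold Mf; pose proof (Rabs_pos (f p1 p2)); nra).
  assert (HMg : 0 <= Mg) by (unfold Mg; pose proof (Rabs_pos (g p1 p2)); nra).
  exists r, (Mf * L2 + Mg * L1). split; auto. split; [nra|].
  intros q1 q2 q1' q2' Hq Hq'.
  replace (f q1 q2 * g q1 q2 - f q1' q2' * g q1' q2')
    with (f q1 q2 * (g q1 q2 - g q1' q2') + g q1' q2' * (f q1 q2 - f q1' q2')) by ring.
  eapply Rle_trans; [apply Rabs_triang|]. rewrite !Rabs_mult.
  pose proof (Bf _ _ Hq). pose proof (Bg _ _ Hq'). pose proof (H1 _ _ _ _ Hq Hq'). pose proof (H2 _ _ _ _ Hq Hq').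
  set (D := Rabs (q1 - q1') + Rabs (q2 - q2')) in *.
  assert (Rabs (f q1 q2) * Rabs (g q1 q2 - g q1' q2') <= Mf * (L2 * D)) by (apply Rmult_le_compat; auto using Rabs_pos).
  assert (Rabs (g q1' q2') * Rabs (f q1 q2 - f q1' q2') <= Mg * (L1 * D)) by (apply Rmult_le_compat; auto using Rabs_pos).
  nra.
Qed.

Lemma lipschitz_near_pt_pow f p1 p2 n : lipschitz_near_pt f p1 p2 -> lipschitz_near_pt (fun a b => f a b ^ n) p1 p2.
Proof.
  intros H. induction n as [|n IH]; [apply (lipschitz_near_pt_const 1)|].
  apply (lipschitz_near_pt_mult f (fun a b => f a b ^ n)); auto.
Qed.

Lemma lipschitz_near_pt_comp g f p1 p2 :
  lipschitz_near_pt f p1 p2 -> lipschitz_near g (f p1 p2) -> lipschitz_near_pt (fun a b => g (f a b)) p1 p2.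
Proof.
  intros [r [L [Hr [HL H]]]] [rho [K [Hrho [HK Hg]]]].
  set (r' := Rmin r (rho / (2 * (L + 1)))).
  assert (Hr' : 0 < r') by (apply Rmin_pos; [auto|apply Rdiv_lt_0_compat; lra]).
  apply (lipschitz_on_box_weaken f p1 p2 r r' L L (Rmin_l _ _) (Rle_refl L)) in H.
  exists r', (K * L). split; auto. split; [nra|].
  assert (Hnear : forall q1 q2, in_box p1 p2 r' q1 q2 -> Rabs (f q1 q2 - f p1 p2) <= rho).
  { assert (Hd : lipschitz_on_box (fun a b => f a b - f p1 p2) p1 p2 r' L).
    { intros z1 z2 z1' z2' Hz Hz'.
      replace (f z1 z2 - f p1 p2 - (f z1' z2' - f p1 p2)) with (f z1 z2 - f z1' z2') by ring. auto. }
    intros q1 q2 Hq.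
    pose proof (bounded_on_box_of_lipschitz _ p1 p2 r' L HL ltac:(lra) Hd q1 q2 Hq) as B.
    cbv beta in B. rewrite Rminus_diag, Rabs_R0, Rplus_0_l in B. eapply Rle_trans; [apply B|].
    pose proof (Rmin_r r (rho / (2 * (L + 1)))) as Hr'rho. fold r' in Hr'rho.
    apply Rle_trans with (L * (2 * (rho / (2 * (L + 1))))); [apply Rmult_le_compat_l; lra|].
    apply Rmult_le_reg_r with (L + 1); [lra|]. field_simplify; lra. }
  intros q1 q2 q1' q2' Hq Hq'.
  eapply Rle_trans; [apply Hg; apply Hnear; auto|].
  rewrite Rmult_assoc. apply Rmult_le_compat_l; auto.
Qed.

Lemma lipschitz_near_of_derive g g' x rho K : 0 < rho -> 0 <= K ->
  (forall c, Rabs (c - x) <= rho -> derivable_pt_lim g c (g' c) /\ Rabs (g' c) <= K) -> lipschitz_near g x.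
Proof.
  intros Hr HK H. exists rho, K. split; auto. split; auto. intros a b Ha Hb.
  apply (mean_value_bound g g'). intros c Hc. apply H.
  unfold Rmin, Rmax in Hc; destruct Rle_dec in Hc; unfold Rabs in *; repeat destruct Rcase_abs; lra.
Qed.

Lemma lipschitz_near_exp x : lipschitz_near exp x.
Proof.
  apply (lipschitz_near_of_derive exp exp x 1 (exp (x + 1))); [lra|left; apply exp_pos|].
  intros c Hc. split; [apply derivable_pt_lim_exp|]. rewrite Rabs_pos_eq by (left; apply exp_pos).
  apply exp_le_compat. unfold Rabs in Hc; destruct Rcase_abs in Hc; lra.
Qed.

Lemma lipschitz_near_sqrt x : 0 < x -> lipschitz_near sqrt x.
Proof.
  intros Hx. assert (Hs : 0 < sqrt (x / 2)) by (apply sqrt_lt_R0; lra).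
  apply (lipschitz_near_of_derive sqrt (fun c => / (2 * sqrt c)) x (x / 2) (/ (2 * sqrt (x / 2)))); [lra| |].
  { left; apply Rinv_0_lt_compat. lra. }
  intros c Hc. assert (Hc0 : x / 2 <= c) by (unfold Rabs in Hc; destruct Rcase_abs in Hc; lra).
  split; [apply derivable_pt_lim_sqrt; lra|].
  assert (sqrt (x / 2) <= sqrt c) by (apply sqrt_le_1_alt; auto).
  rewrite Rabs_pos_eq by (left; apply Rinv_0_lt_compat; lra).
  apply Rinv_le_contravar; lra.
Qed.

Lemma lipschitz_near_inv x : x <> 0 -> lipschitz_near Rinv x.
Proof.
  intros Hx. assert (Hax : 0 < Rabs x) by (apply Rabs_pos_lt; auto).
  exists (Rabs x / 2), (/ ((Rabs x / 2) * (Rabs x / 2))). split; [lra|]. split.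
  { left; apply Rinv_0_lt_compat. nra. }
  intros a b Ha Hb.
  assert (Ha0 : Rabs x / 2 <= Rabs a).
  { pose proof (Rabs_triang_inv x (x - a)). replace (x - (x - a)) with a in H by ring.
    rewrite Rabs_minus_sym in Ha. lra. }
  assert (Hb0 : Rabs x / 2 <= Rabs b).
  { pose proof (Rabs_triang_inv x (x - b)). replace (x - (x - b)) with b in H by ring.
    rewrite Rabs_minus_sym in Hb. lra. }
  assert (Ha1 : a <> 0) by (intros ->; rewrite Rabs_R0 in Ha0; lra).
  assert (Hb1 : b <> 0) by (intros ->; rewrite Rabs_R0 in Hb0; lra).
  replace (/ a - / b) with ((b - a) * / (a * b)) by (field; auto).
  rewrite Rabs_mult, Rabs_minus_sym, Rmult_comm. apply Rmult_le_compat_r; [apply Rabs_pos|].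
  rewrite Rabs_inv, Rabs_mult. apply Rinv_le_contravar; [nra|apply Rmult_le_compat; lra].
Qed.

Lemma lipschitz_near_pt_inv f p1 p2 :
  lipschitz_near_pt f p1 p2 -> f p1 p2 <> 0 -> lipschitz_near_pt (fun a b => / f a b) p1 p2.
Proof. intros. apply (lipschitz_near_pt_comp Rinv f); auto. apply lipschitz_near_inv; auto. Qed.

Lemma lipschitz_near_pt_div f g p1 p2 :
  lipschitz_near_pt f p1 p2 -> lipschitz_near_pt g p1 p2 -> g p1 p2 <> 0 ->
  lipschitz_near_pt (fun a b => f a b / g a b) p1 p2.
Proof. intros. apply (lipschitz_near_pt_mult f (fun a b => / g a b)); auto. apply lipschitz_near_pt_inv; auto. Qed.

Lemma lipschitz_near_pt_sqrt f p1 p2 :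
  lipschitz_near_pt f p1 p2 -> 0 < f p1 p2 -> lipschitz_near_pt (fun a b => sqrt (f a b)) p1 p2.
Proof. intros. apply (lipschitz_near_pt_comp sqrt f); auto. apply lipschitz_near_sqrt; auto. Qed.

Lemma lipschitz_near_pt_exp f p1 p2 : lipschitz_near_pt f p1 p2 -> lipschitz_near_pt (fun a b => exp (f a b)) p1 p2.
Proof. intros. apply (lipschitz_near_pt_comp exp f); auto. apply lipschitz_near_exp. Qed.

Lemma lipschitz_near_pt_cosh p1 p2 : lipschitz_near_pt (fun a _ => cosh a) p1 p2.
Proof.
  unfold cosh. apply (lipschitz_near_pt_div (fun a _ => exp a + exp (- a)) (fun _ _ => 2));
    [|apply lipschitz_near_pt_const|lra].
  apply (lipschitz_near_pt_plus (fun a _ => exp a) (fun a _ => exp (- a))).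
  - apply (lipschitz_near_pt_exp (fun a _ => a)), lipschitz_near_pt_fst.
  - apply (lipschitz_near_pt_exp (fun a _ => - a)), (lipschitz_near_pt_opp (fun a _ => a)), lipschitz_near_pt_fst.
Qed.

Lemma lipschitz_near_pt_sinh p1 p2 : lipschitz_near_pt (fun a _ => sinh a) p1 p2.
Proof.
  unfold sinh. apply (lipschitz_near_pt_div (fun a _ => exp a - exp (- a)) (fun _ _ => 2));
    [|apply lipschitz_near_pt_const|lra].
  apply (lipschitz_near_pt_minus (fun a _ => exp a) (fun a _ => exp (- a))).
  - apply (lipschitz_near_pt_exp (fun a _ => a)), lipschitz_near_pt_fst.
  - apply (lipschitz_near_pt_exp (fun a _ => - a)), (lipschitz_near_pt_opp (fun a _ => a)), lipschitz_near_pt_fst.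
Qed.

Lemma locally_lipschitz_of_near_pt F1 F2 (U : R -> R -> Prop) :
  (forall p1 p2, U p1 p2 -> lipschitz_near_pt F1 p1 p2 /\ lipschitz_near_pt F2 p1 p2 /\
     exists r, 0 < r /\ forall q1 q2, in_box p1 p2 r q1 q2 -> U q1 q2) ->
  locally_lipschitz F1 F2 U.
Proof.
  intros H p1 p2 Hp.
  destruct (H p1 p2 Hp) as [[r1 [L1 [Hr1 [HL1 H1]]]] [[r2 [L2 [Hr2 [HL2 H2]]]] [r3 [Hr3 H3]]]].
  set (r := Rmin (Rmin r1 r2) r3).
  pose proof (Rmin_l (Rmin r1 r2) r3). pose proof (Rmin_r (Rmin r1 r2) r3).
  pose proof (Rmin_l r1 r2). pose proof (Rmin_r r1 r2).
  exists r, (L1 + L2). split; [repeat apply Rmin_pos; auto|]. split; [lra|].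
  split; [|split].
  - apply (lipschitz_on_box_weaken F1 p1 p2 r1 r L1); auto; unfold r; lra.
  - apply (lipschitz_on_box_weaken F2 p1 p2 r2 r L2); auto; unfold r; lra.
  - intros q1 q2 Hq. apply H3. eapply in_box_mono; [|exact Hq]. unfold r; lra.
Qed.

Lemma lipschitz_near_pt_gt f p1 p2 c :
  lipschitz_near_pt f p1 p2 -> c < f p1 p2 ->
  exists r, 0 < r /\ forall q1 q2, in_box p1 p2 r q1 q2 -> c < f q1 q2.
Proof.
  intros [r [L [Hr [HL H]]]] Hc.
  set (r' := Rmin r ((f p1 p2 - c) / (4 * (L + 1)))).
  pose proof (Rmin_l r ((f p1 p2 - c) / (4 * (L + 1)))) as Hr'1.
  pose proof (Rmin_r r ((f p1 p2 - c) / (4 * (L + 1)))) as Hr'2. fold r' in Hr'1, Hr'2.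
  assert (Hr' : 0 < r') by (apply Rmin_pos; [auto|apply Rdiv_lt_0_compat; lra]).
  exists r'. split; auto. intros q1 q2 Hq.
  pose proof (H _ _ _ _ (in_box_mono _ _ _ _ _ _ Hr'1 Hq) (in_box_center p1 p2 r ltac:(lra))) as Hf.
  destruct Hq as [A B].
  assert (L * (Rabs (q1 - p1) + Rabs (q2 - p2)) <= L * (2 * ((f p1 p2 - c) / (4 * (L + 1)))))
    by (apply Rmult_le_compat_l; lra).
  assert (L * (2 * ((f p1 p2 - c) / (4 * (L + 1)))) < f p1 p2 - c)
    by (apply Rmult_lt_reg_r with (4 * (L + 1)); [lra|]; field_simplify; nra).
  pose proof (Rle_abs (f p1 p2 - f q1 q2)) as Habs. rewrite Rabs_minus_sym in Habs. lra.
Qed.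

Lemma closed_plane_set_ge f c :
  (forall p1 p2, lipschitz_near_pt f p1 p2) -> closed_plane_set (fun q1 q2 => c <= f q1 q2).
Proof.
  intros Hf q1 q2 Hcl. destruct (Rle_or_lt c (f q1 q2)) as [h|h]; auto. exfalso.
  destruct (lipschitz_near_pt_gt (fun a b => - f a b) q1 q2 (- c)) as [r [Hr Hnear]];
    [apply lipschitz_near_pt_opp, Hf|lra|].
  destruct (Hcl r Hr) as [k1 [k2 [Hk [A B]]]].
  assert (- c < - f k1 k2) by (apply Hnear; split; auto). lra.
Qed.

Lemma closed_plane_set_and (K K' : R -> R -> Prop) :
  closed_plane_set K -> closed_plane_set K' -> closed_plane_set (fun q1 q2 => K q1 q2 /\ K' q1 q2).
Proof.
  intros HK HK' q1 q2 Hcl. split; [apply HK|apply HK']; intros eps Heps;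
    destruct (Hcl eps Heps) as [k1 [k2 [[? ?] ?]]]; exists k1, k2; auto.
Qed.

(** * The vortex system *)

Definition kappa (gamma th : R) : R := cosh th - sqrt gamma * sinh th.

Definition energy_domain (d gamma : R) : R -> R -> Prop :=
  fun th W => 0 < th /\ 0 < Egam d gamma th W.

Lemma sqrt_gt1 x : 1 < x -> 1 < sqrt x.
Proof. intros H. rewrite <- sqrt_1. apply sqrt_lt_1_alt. lra. Qed.

Lemma sinh_pos x : 0 < x -> 0 < sinh x.
Proof. intros. unfold sinh. assert (exp (- x) < exp x) by (apply exp_increasing; lra). lra. Qed.

Lemma cosh_pos x : 0 < cosh x.
Proof. unfold cosh. pose proof (exp_pos x). pose proof (exp_pos (- x)). lra. Qed.

Lemma kappa_exp gamma th :
  kappa gamma th = ((1 - sqrt gamma) * exp th + (1 + sqrt gamma) * exp (- th)) / 2.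
Proof. unfold kappa, cosh, sinh. field. Qed.

Lemma kappa_decreasing gamma a b : 1 < gamma -> a < b -> kappa gamma b < kappa gamma a.
Proof.
  intros Hg Hab. rewrite !kappa_exp. pose proof (sqrt_gt1 gamma Hg).
  assert (exp a < exp b) by (apply exp_increasing; auto).
  assert (exp (- b) < exp (- a)) by (apply exp_increasing; lra).
  nra.
Qed.

Lemma exp_theta_gamma_sq gamma : 1 < gamma ->
  exp (theta_gamma gamma) * exp (theta_gamma gamma) = (sqrt gamma + 1) / (sqrt gamma - 1).
Proof.
  intros Hg. pose proof (sqrt_gt1 gamma Hg).
  assert (Hinv : 0 < / sqrt gamma < 1).
  { split; [apply Rinv_0_lt_compat; lra|]. rewrite <- Rinv_1. apply Rinv_lt_contravar; lra. }
  rewrite <- exp_plus. unfold theta_gamma, artanh.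
  replace (/ 2 * ln ((1 + / sqrt gamma) / (1 - / sqrt gamma)) + / 2 * ln ((1 + / sqrt gamma) / (1 - / sqrt gamma)))
    with (ln ((1 + / sqrt gamma) / (1 - / sqrt gamma))) by field.
  rewrite exp_ln by (apply Rdiv_lt_0_compat; lra). field. lra.
Qed.

Lemma kappa_theta_gamma gamma : 1 < gamma -> kappa gamma (theta_gamma gamma) = 0.
Proof.
  intros Hg. pose proof (sqrt_gt1 gamma Hg). pose proof (exp_theta_gamma_sq gamma Hg) as E.
  rewrite kappa_exp, exp_Ropp. set (y := exp (theta_gamma gamma)) in *.
  assert (0 < y) by apply exp_pos.
  replace ((1 - sqrt gamma) * y + (1 + sqrt gamma) * / y)
    with (((1 - sqrt gamma) * (y * y) + (1 + sqrt gamma)) / y) by (field; lra).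
  rewrite E. field. lra.
Qed.

Lemma kappa_eq0 gamma th : 1 < gamma -> kappa gamma th = 0 -> th = theta_gamma gamma.
Proof.
  intros Hg Hk. destruct (Rtotal_order th (theta_gamma gamma)) as [h|[h|h]]; auto;
    pose proof (kappa_decreasing gamma _ _ Hg h) as Hd; rewrite kappa_theta_gamma in Hd; lra.
Qed.

Lemma theta_gamma_pos gamma : 1 < gamma -> 0 < theta_gamma gamma.
Proof.
  intros Hg. destruct (Rle_or_lt (theta_gamma gamma) 0) as [h|h]; auto.
  exfalso. pose proof (sqrt_gt1 gamma Hg).
  assert (Hk : kappa gamma 0 <= kappa gamma (theta_gamma gamma)).
  { destruct h as [h|h]; [left; apply kappa_decreasing; auto|rewrite h; lra]. }
  rewrite kappa_theta_gamma, kappa_exp, Ropp_0, exp_0 in Hk by auto. lra.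
Qed.

Lemma Egam_kappa d gamma th W : Egam d gamma th W = d / gamma * kappa gamma th ^ 2 + W ^ 2.
Proof. reflexivity. Qed.

Lemma Egam_nonneg d gamma th W : 0 < d -> 1 < gamma -> 0 <= Egam d gamma th W.
Proof.
  intros. rewrite Egam_kappa. assert (0 < d / gamma) by (apply Rdiv_lt_0_compat; lra).
  pose proof (pow2_ge_0 (kappa gamma th)). pose proof (pow2_ge_0 W). nra.
Qed.

(* The excluded point [(theta_gamma, 0)] is exactly the zero set of [Egam] in the half plane. *)
Lemma Omega_iff_energy_domain d gamma th W : 0 < d -> 1 < gamma ->
  Omega gamma th W <-> energy_domain d gamma th W.
Proof.
  intros Hd Hg. unfold Omega, energy_domain. pose proof (Egam_nonneg d gamma th W Hd Hg) as HE.
  assert (Hdg : 0 < d / gamma) by (apply Rdiv_lt_0_compat; lra).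
  split.
  - intros [Hth Hne]. split; auto. destruct HE as [HE|HE]; auto. exfalso. apply Hne.
    rewrite Egam_kappa in HE. pose proof (pow2_ge_0 (kappa gamma th)). pose proof (pow2_ge_0 W).
    assert (Hk : kappa gamma th = 0) by (apply NNPP; intro Hn; apply (pow_nonzero _ 2) in Hn; nra).
    assert (HW : W = 0) by (apply NNPP; intro Hn; apply (pow_nonzero _ 2) in Hn; nra).
    rewrite (kappa_eq0 gamma th Hg Hk), HW. auto.
  - intros [Hth HE']. split; auto. intros Heq. inversion Heq. subst.
    rewrite Egam_kappa, kappa_theta_gamma in HE' by auto. simpl in HE'. lra.
Qed.

Ltac lipschitz_near_pt_polynomial :=
  repeat first [ apply lipschitz_near_pt_const | apply lipschitz_near_pt_fst | apply lipschitz_near_pt_snd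
  | apply lipschitz_near_pt_cosh | apply lipschitz_near_pt_sinh | apply lipschitz_near_pt_plus
  | apply lipschitz_near_pt_minus | apply lipschitz_near_pt_opp | apply lipschitz_near_pt_pow
  | apply lipschitz_near_pt_mult ].

Lemma lipschitz_near_pt_Egam d gamma p1 p2 : lipschitz_near_pt (Egam d gamma) p1 p2.
Proof.
  change (lipschitz_near_pt (fun a b => d / gamma * (cosh a - sqrt gamma * sinh a) ^ 2 + b ^ 2) p1 p2).
  lipschitz_near_pt_polynomial.
Qed.

Lemma lipschitz_near_pt_E32 d gamma p1 p2 :
  0 < Egam d gamma p1 p2 -> lipschitz_near_pt (E32 d gamma) p1 p2.
Proof.
  intros. apply (lipschitz_near_pt_pow (fun a b => sqrt (Egam d gamma a b))).
  apply (lipschitz_near_pt_sqrt (Egam d gamma)); auto. apply lipschitz_near_pt_Egam.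
Qed.

Lemma E32_pos d gamma a b : 0 < Egam d gamma a b -> 0 < E32 d gamma a b.
Proof. intros. apply pow_lt, sqrt_lt_R0. auto. Qed.

Lemma vortex_locally_lipschitz d alpha gamma : 0 < d -> 1 < gamma ->
  locally_lipschitz (G1 d alpha gamma) (G2 d alpha gamma) (energy_domain d gamma).
Proof.
  intros Hd Hg. apply locally_lipschitz_of_near_pt. intros p1 p2 [Hp1 HE].
  pose proof (sqrt_gt1 gamma Hg). pose proof (E32_pos d gamma p1 p2 HE).
  split; [|split].
  - apply (lipschitz_near_pt_div (fun a b => - (alpha * sqrt gamma * b)) (E32 d gamma));
      [lipschitz_near_pt_polynomial|apply lipschitz_near_pt_E32; auto|lra].
  - apply (lipschitz_near_pt_plus (fun a _ => - / sqrt d * (sqrt gamma ^ 3 / cosh a + / sinh a))).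
    + apply lipschitz_near_pt_mult; [apply lipschitz_near_pt_const|]. apply lipschitz_near_pt_plus.
      * apply lipschitz_near_pt_div; [apply lipschitz_near_pt_const|apply lipschitz_near_pt_cosh|].
        pose proof (cosh_pos p1). lra.
      * apply (lipschitz_near_pt_inv (fun a _ => sinh a)); [apply lipschitz_near_pt_sinh|].
        pose proof (sinh_pos p1 Hp1). lra.
    + apply (lipschitz_near_pt_div _ (fun a b => sqrt gamma * E32 d gamma a b)).
      * lipschitz_near_pt_polynomial.
      * apply lipschitz_near_pt_mult; [apply lipschitz_near_pt_const|apply lipschitz_near_pt_E32; auto].
      * nra.
  - destruct (lipschitz_near_pt_gt _ _ _ 0 (lipschitz_near_pt_fst p1 p2) Hp1) as [r1 [Hr1 H1]].
    destruct (lipschitz_near_pt_gt _ _ _ 0 (lipschitz_near_pt_Egam d gamma p1 p2) HE) as [r2 [Hr2 H2]].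
    exists (Rmin r1 r2). split; [apply Rmin_pos; auto|]. intros q1 q2 Hq. split.
    + apply (H1 q1 q2). eapply in_box_mono; [apply Rmin_l|eauto].
    + apply (H2 q1 q2). eapply in_box_mono; [apply Rmin_r|eauto].
Qed.

(* [2 atan (exp th)] and [ln ((exp th - 1) / (exp th + 1)) = ln (tanh (th / 2))] are primitives of
   [/ cosh th] and [/ sinh th], so that [hamiltonian] is a first integral of the system. *)
Definition potential (d gamma th : R) : R :=
  (sqrt gamma ^ 3 * (2 * atan (exp th)) + ln ((exp th - 1) / (exp th + 1))) / sqrt d.

Definition hamiltonian (d alpha gamma th W : R) : R :=
  alpha * sqrt gamma / sqrt (Egam d gamma th W) + potential d gamma th.

Lemma hamiltonian_derivative d alpha gamma (th W : R -> R) t :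
  0 < d -> 1 < gamma ->
  derivable_pt_lim th t (G1 d alpha gamma (th t) (W t)) ->
  derivable_pt_lim W t (G2 d alpha gamma (th t) (W t)) ->
  0 < th t -> 0 < Egam d gamma (th t) (W t) ->
  derivable_pt_lim (fun s => hamiltonian d alpha gamma (th s) (W s)) t 0.
Proof.
  intros Hd Hg dth dW Hth HE.
  apply is_derive_Reals in dth. apply is_derive_Reals in dW. apply is_derive_Reals.
  assert (He1 : 1 < exp (th t)) by (rewrite <- exp_0; apply exp_increasing; auto).
  unfold hamiltonian, potential. unfold Egam in *.
  auto_derive.
  - unfold Rminus in HE; simpl in HE. repeat split; try (eexists; eassumption); try lra; try exact HE;
      try (apply Rgt_not_eq, sqrt_lt_R0; exact HE);
      try (apply Rmult_lt_0_compat; [lra|apply Rinv_0_lt_compat; lra]).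
  - replace (Derive (fun x => th x) t) with (G1 d alpha gamma (th t) (W t)) by (symmetry; apply is_derive_unique; auto).
    replace (Derive (fun x => W x) t) with (G2 d alpha gamma (th t) (W t)) by (symmetry; apply is_derive_unique; auto).
    unfold G1, G2, E32, Egam in *.
    set (E0 := d / gamma * (cosh (th t) - sqrt gamma * sinh (th t)) ^ 2 + W t ^ 2) in *.
    replace (d / gamma * ((cosh (th t) + - (sqrt gamma * sinh (th t))) * ((cosh (th t) + - (sqrt gamma * sinh (th t))) * 1))
             + W t * (W t * 1)) with E0 by (unfold E0; ring).
    rewrite sqrt_sqrt by lra.
    assert (HS : sqrt E0 ^ 3 = sqrt E0 * E0) by (simpl; rewrite Rmult_1_r, <- Rmult_assoc, sqrt_sqrt; lra).
    rewrite HS.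
    assert (HSp : 0 < sqrt E0) by (apply sqrt_lt_R0; lra).
    assert (Hsg : sqrt gamma * sqrt gamma = gamma) by (apply sqrt_sqrt; lra).
    assert (Hsg1 : 1 < sqrt gamma) by (apply sqrt_gt1; auto).
    assert (Hsd : 0 < sqrt d) by (apply sqrt_lt_R0; lra).
    set (S := sqrt E0) in *. clearbody S.
    assert (HE0 : E0 <> 0) by lra. clear HS.
    unfold E0 in *. clear E0 dth dW HE.
    (* What remains is a rational identity in [e = exp (th t)], [w = W t] and [sg = sqrt gamma]. *)
    set (sg := sqrt gamma) in *. rewrite <- Hsg. rewrite <- Hsg in HE0. clearbody sg.
    unfold cosh, sinh in *. rewrite exp_Ropp in *. set (e := exp (th t)) in *. clearbody e.
    set (w := W t) in *. clearbody w.
    assert (He0 : e <> 0) by lra. assert (He2 : e * e - 1 <> 0) by nra. assert (He3 : 1 + e * e <> 0) by nra.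
    field_simplify_eq; [ring|].
    repeat split; try lra; try nra; auto.
    replace (d * (e * e + 1 - sg * (e * e - 1)) ^ 2 + w ^ 2 * (sg * sg * (e ^ 2 * 4)))
      with ((d / (sg * sg) * ((e + / e) / 2 - sg * ((e - / e) / 2)) ^ 2 + w ^ 2) * (sg * sg * (e ^ 2 * 4)))
      by (field; lra).
    apply Rmult_integral_contrapositive_currified; auto. nra.
Qed.

Lemma hamiltonian_const d alpha gamma a th W : 0 < d -> 1 < gamma ->
  solves_on (G1 d alpha gamma) (G2 d alpha gamma) (energy_domain d gamma) (- a) a th W ->
  forall t, - a < t < a -> hamiltonian d alpha gamma (th t) (W t) = hamiltonian d alpha gamma (th 0) (W 0).
Proof.
  intros Hd Hg HS t Ht. apply Rminus_diag_uniq, Rabs_eq_0, Rle_antisym; [|apply Rabs_pos].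
  pose proof (mean_value_bound (fun s => hamiltonian d alpha gamma (th s) (W s)) (fun _ => 0) 0 t 0) as Hm.
  rewrite Rmult_0_l in Hm. apply Hm. intros c Hc. pose proof (between_in_interval (- a) a 0 t c ltac:(lra) Ht Hc) as Hcin.
  destruct (HS c Hcin) as [d1 [d2 [U1 U2]]]. rewrite Rabs_R0. split; [apply hamiltonian_derivative|]; auto; lra.
Qed.

Lemma potential_mono d gamma a b :
  0 < d -> 1 < gamma -> 0 < a -> a <= b -> potential d gamma a <= potential d gamma b.
Proof.
  intros Hd Hg Ha Hab. unfold potential. pose proof (sqrt_gt1 gamma Hg).
  assert (Hsd : 0 < sqrt d) by (apply sqrt_lt_R0; auto).
  assert (Hea : 1 < exp a) by (rewrite <- exp_0; apply exp_increasing; auto).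
  assert (Heab : exp a <= exp b) by (apply exp_le_compat; auto).
  assert (A1 : atan (exp a) <= atan (exp b)).
  { destruct Heab as [h|h]; [left; apply atan_increasing; auto|rewrite h; lra]. }
  assert (A2 : ln ((exp a - 1) / (exp a + 1)) <= ln ((exp b - 1) / (exp b + 1))).
  { assert (Hq : (exp a - 1) / (exp a + 1) <= (exp b - 1) / (exp b + 1)).
    { apply Rmult_le_reg_r with ((exp a + 1) * (exp b + 1)); [nra|]. field_simplify; nra. }
    destruct Hq as [Hq | ->]; [|lra]. left. apply ln_increasing; auto. apply Rdiv_lt_0_compat; lra. }
  unfold Rdiv. apply Rmult_le_compat_r; [left; apply Rinv_0_lt_compat; auto|].
  assert (0 <= sqrt gamma ^ 3) by (apply pow_le; lra). nra.
Qed.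

Lemma potential_small d gamma B : 0 < d -> 1 < gamma ->
  exists th2, 0 < th2 /\ forall th, 0 < th < th2 -> potential d gamma th < B.
Proof.
  intros Hd Hg. pose proof (sqrt_gt1 gamma Hg).
  assert (Hsd : 0 < sqrt d) by (apply sqrt_lt_R0; auto).
  set (K := B * sqrt d - sqrt gamma ^ 3 * PI).
  exists (ln (1 + exp K)). split.
  { rewrite <- ln_1. apply ln_increasing; [lra|]. pose proof (exp_pos K); lra. }
  intros th [H1 H2].
  assert (He : 1 < exp th) by (rewrite <- exp_0; apply exp_increasing; auto).
  assert (He2 : exp th < 1 + exp K).
  { rewrite <- (exp_ln (1 + exp K)) by (pose proof (exp_pos K); lra). apply exp_increasing; auto. }
  assert (L1 : ln ((exp th - 1) / (exp th + 1)) < ln (exp th - 1)).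
  { apply ln_increasing; [apply Rdiv_lt_0_compat; lra|].
    apply Rmult_lt_reg_r with (exp th + 1); [lra|]. field_simplify; nra. }
  assert (L2 : ln (exp th - 1) < K) by (rewrite <- (ln_exp K); apply ln_increasing; lra).
  assert (A : atan (exp th) < PI / 2) by apply atan_bound.
  assert (0 <= sqrt gamma ^ 3) by (apply pow_le; lra).
  unfold potential. apply Rmult_lt_reg_r with (sqrt d); auto.
  unfold Rdiv. rewrite Rmult_assoc, Rinv_l, Rmult_1_r by lra.
  unfold K in L2. nra.
Qed.

(* Below [theta_gamma / 2] the energy is bounded below by [kappa (theta_gamma / 2)], so the first
   term of [hamiltonian] stays bounded while [potential] tends to [-oo] as [th] tends to [0]. *)
Lemma level_set_theta_lower_bound d alpha gamma H0 : 0 < d -> 0 < alpha -> 1 < gamma ->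
  exists thm, 0 < thm /\ forall th W, 0 < th -> 0 < Egam d gamma th W ->
    hamiltonian d alpha gamma th W = H0 -> thm <= th.
Proof.
  intros Hd Ha Hg. pose proof (sqrt_gt1 gamma Hg) as Hsg.
  pose proof (theta_gamma_pos gamma Hg) as Htg.
  set (th1 := theta_gamma gamma / 2).
  assert (Hk1 : 0 < kappa gamma th1).
  { rewrite <- (kappa_theta_gamma gamma Hg). apply kappa_decreasing; auto. unfold th1; lra. }
  set (k1 := kappa gamma th1) in *.
  assert (Hdg : 0 < d / gamma) by (apply Rdiv_lt_0_compat; lra).
  assert (Hsdg : 0 < sqrt (d / gamma)) by (apply sqrt_lt_R0; auto).
  set (U1 := alpha * sqrt gamma / (sqrt (d / gamma) * k1)).
  destruct (potential_small d gamma (H0 - U1) Hd Hg) as [th2 [Hth2 Hsmall]].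
  exists (Rmin th1 th2). split; [apply Rmin_pos; unfold th1; lra|].
  intros th W Hth HE HH. destruct (Rle_or_lt (Rmin th1 th2) th) as [h|h]; auto. exfalso.
  assert (h1 : th < th1) by (pose proof (Rmin_l th1 th2); lra).
  assert (h2 : th < th2) by (pose proof (Rmin_r th1 th2); lra).
  pose proof (Hsmall th (conj Hth h2)) as Hpot.
  assert (Hk : k1 < kappa gamma th) by (apply kappa_decreasing; auto).
  assert (HE1 : d / gamma * k1 ^ 2 <= Egam d gamma th W).
  { rewrite Egam_kappa. pose proof (pow2_ge_0 W).
    assert (k1 ^ 2 <= kappa gamma th ^ 2) by (simpl; nra). nra. }
  assert (HS : sqrt (d / gamma) * k1 <= sqrt (Egam d gamma th W)).
  { rewrite <- (sqrt_pow2 k1) by lra. rewrite <- sqrt_mult by (try lra; apply pow2_ge_0).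
    apply sqrt_le_1_alt. auto. }
  assert (HU : alpha * sqrt gamma / sqrt (Egam d gamma th W) <= U1).
  { unfold U1. apply Rmult_le_compat_l; [nra|]. apply Rinv_le_contravar; nra. }
  unfold hamiltonian in HH. lra.
Qed.

Lemma level_set_energy_lower_bound d alpha gamma H0 thm : 0 < d -> 0 < alpha -> 1 < gamma -> 0 < thm ->
  exists eps, 0 < eps /\ forall th W, thm <= th -> 0 < Egam d gamma th W ->
    hamiltonian d alpha gamma th W = H0 -> eps <= Egam d gamma th W.
Proof.
  intros Hd Ha Hg Hthm. pose proof (sqrt_gt1 gamma Hg).
  set (Umax := Rmax (H0 - potential d gamma thm) 1).
  assert (HUmax : 0 < Umax) by (unfold Umax; pose proof (Rmax_r (H0 - potential d gamma thm) 1); lra).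
  assert (Hc : 0 < alpha * sqrt gamma / Umax) by (apply Rdiv_lt_0_compat; nra).
  exists ((alpha * sqrt gamma / Umax) ^ 2). split; [apply pow_lt; auto|].
  intros th W Hth HE HH.
  pose proof (potential_mono d gamma thm th Hd Hg Hthm Hth).
  assert (HSp : 0 < sqrt (Egam d gamma th W)) by (apply sqrt_lt_R0; auto).
  assert (Hb : alpha * sqrt gamma / sqrt (Egam d gamma th W) <= Umax).
  { unfold hamiltonian in HH. pose proof (Rmax_l (H0 - potential d gamma thm) 1). unfold Umax. lra. }
  assert (Hb2 : alpha * sqrt gamma / Umax <= sqrt (Egam d gamma th W)).
  { unfold Rdiv in *. apply Rmult_le_reg_r with (Umax * / sqrt (Egam d gamma th W)).
    - apply Rmult_lt_0_compat; [lra|apply Rinv_0_lt_compat; auto].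
    - replace (alpha * sqrt gamma * / Umax * (Umax * / sqrt (Egam d gamma th W)))
        with (alpha * sqrt gamma * / sqrt (Egam d gamma th W)) by (field; lra).
      replace (sqrt (Egam d gamma th W) * (Umax * / sqrt (Egam d gamma th W))) with Umax by (field; lra).
      auto. }
  rewrite <- (sqrt_sqrt (Egam d gamma th W)) by lra. simpl. nra.
Qed.

Lemma abs_W_le d gamma th W : 0 < d -> 1 < gamma -> Rabs W <= sqrt (Egam d gamma th W).
Proof.
  intros Hd Hg. rewrite <- sqrt_Rsqr_abs. apply sqrt_le_1_alt. rewrite Egam_kappa.
  assert (0 < d / gamma) by (apply Rdiv_lt_0_compat; lra). pose proof (pow2_ge_0 (kappa gamma th)).
  unfold Rsqr. simpl. nra.
Qed.

Lemma abs_kappa_le d gamma th W : 0 < d -> 1 < gamma ->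
  Rabs (kappa gamma th) <= sqrt (Egam d gamma th W) * sqrt (gamma / d).
Proof.
  intros Hd Hg. assert (0 < gamma / d) by (apply Rdiv_lt_0_compat; lra).
  rewrite <- sqrt_mult by (try apply Egam_nonneg; auto; lra).
  rewrite <- sqrt_Rsqr_abs. apply sqrt_le_1_alt. rewrite Egam_kappa. pose proof (pow2_ge_0 W).
  replace ((d / gamma * kappa gamma th ^ 2 + W ^ 2) * (gamma / d))
    with (kappa gamma th ^ 2 + W ^ 2 * (gamma / d)) by (field; lra).
  unfold Rsqr. simpl. nra.
Qed.

Lemma cosh_le_exp x : 0 <= x -> cosh x <= exp x.
Proof. intros H. unfold cosh. assert (exp (- x) <= exp x) by (apply exp_le_compat; lra). lra. Qed.

Lemma abs_sinh_le_cosh x : 0 <= x -> Rabs (sinh x) <= cosh x.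
Proof.
  intros H. unfold sinh, cosh. pose proof (exp_pos x). pose proof (exp_pos (- x)).
  assert (exp (- x) <= exp x) by (apply exp_le_compat; lra). rewrite Rabs_pos_eq; lra.
Qed.

Lemma G1_bound d alpha gamma th W : 0 < d -> 0 < alpha -> 1 < gamma -> 0 < Egam d gamma th W ->
  Rabs (G1 d alpha gamma th W) <= alpha * sqrt gamma / Egam d gamma th W.
Proof.
  intros Hd Ha Hg HE. pose proof (sqrt_gt1 gamma Hg).
  pose proof (abs_W_le d gamma th W Hd Hg) as HW.
  unfold G1, E32. set (S := sqrt (Egam d gamma th W)) in *.
  assert (HS : 0 < S) by (apply sqrt_lt_R0; auto).
  assert (HSS : S * S = Egam d gamma th W) by (apply sqrt_sqrt; lra).
  rewrite <- HSS.
  replace (- (alpha * sqrt gamma * W) / S ^ 3) with ((alpha * sqrt gamma / (S * (S * S))) * (- W)) by (field; lra).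
  assert (Hc : 0 < alpha * sqrt gamma / (S * (S * S))) by (apply Rdiv_lt_0_compat; nra).
  rewrite Rabs_mult, Rabs_Ropp, (Rabs_pos_eq (alpha * sqrt gamma / (S * (S * S)))) by lra.
  apply Rle_trans with (alpha * sqrt gamma / (S * (S * S)) * S); [apply Rmult_le_compat_l; lra|].
  right; field; lra.
Qed.

Lemma G2_bound d alpha gamma th W : 0 < d -> 0 < alpha -> 1 < gamma -> 0 < th -> 0 < Egam d gamma th W ->
  Rabs (G2 d alpha gamma th W) <=
    (sqrt gamma ^ 3 + / sinh th) / sqrt d
    + alpha * d * (1 + sqrt gamma) * sqrt (gamma / d) * exp th / (sqrt gamma * Egam d gamma th W).
Proof.
  intros Hd Ha Hg Hth HE. pose proof (sqrt_gt1 gamma Hg) as Hsg.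
  assert (Hsd : 0 < sqrt d) by (apply sqrt_lt_R0; auto).
  assert (Hsh : 0 < sinh th) by (apply sinh_pos; auto).
  assert (Hch : 1 <= cosh th).
  { unfold cosh. pose proof (exp_ineq1_le th). pose proof (exp_ineq1_le (- th)). lra. }
  pose proof (abs_kappa_le d gamma th W Hd Hg) as Hk. unfold kappa in Hk.
  unfold G2, E32. set (S := sqrt (Egam d gamma th W)) in *.
  assert (HS : 0 < S) by (apply sqrt_lt_R0; auto).
  assert (HSS : S * S = Egam d gamma th W) by (apply sqrt_sqrt; lra).
  eapply Rle_trans; [apply Rabs_triang|]. apply Rplus_le_compat.
  - replace (- / sqrt d * (sqrt gamma ^ 3 / cosh th + / sinh th))
      with (- ((sqrt gamma ^ 3 / cosh th + / sinh th) / sqrt d)) by (field; split; lra).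
    rewrite Rabs_Ropp.
    assert (A : 0 < sqrt gamma ^ 3) by (apply pow_lt; lra).
    assert (B : sqrt gamma ^ 3 / cosh th <= sqrt gamma ^ 3).
    { apply Rmult_le_reg_r with (cosh th); [lra|]. unfold Rdiv. rewrite Rmult_assoc, Rinv_l, Rmult_1_r by lra. nra. }
    assert (C : 0 < / sinh th) by (apply Rinv_0_lt_compat; auto).
    assert (D : 0 < sqrt gamma ^ 3 / cosh th) by (apply Rdiv_lt_0_compat; lra).
    rewrite Rabs_pos_eq by (left; apply Rdiv_lt_0_compat; lra).
    unfold Rdiv. apply Rmult_le_compat_r; [left; apply Rinv_0_lt_compat; lra|]. unfold Rdiv in B. lra.
  - rewrite <- HSS.
    replace (alpha * d * (sinh th - sqrt gamma * cosh th) * (cosh th - sqrt gamma * sinh th) / (sqrt gamma * S ^ 3))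
      with ((alpha * d / (sqrt gamma * (S * (S * S)))) *
            ((sinh th - sqrt gamma * cosh th) * (cosh th - sqrt gamma * sinh th))) by (field; lra).
    assert (Hc : 0 < alpha * d / (sqrt gamma * (S * (S * S))))
      by (apply Rdiv_lt_0_compat; [nra|]; apply Rmult_lt_0_compat; nra).
    rewrite Rabs_mult, (Rabs_pos_eq (alpha * d / (sqrt gamma * (S * (S * S))))), Rabs_mult by lra.
    assert (E1 : Rabs (sinh th - sqrt gamma * cosh th) <= (1 + sqrt gamma) * exp th).
    { pose proof (abs_sinh_le_cosh th ltac:(lra)). pose proof (cosh_le_exp th ltac:(lra)).
      pose proof (Rabs_triang (sinh th) (- (sqrt gamma * cosh th))) as Ht.
      rewrite Rabs_Ropp, Rabs_mult, (Rabs_pos_eq (sqrt gamma)), (Rabs_pos_eq (cosh th)) in Ht by lra.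
      unfold Rminus. nra. }
    assert (Hsq : 0 <= sqrt (gamma / d)) by apply sqrt_pos.
    apply Rle_trans with (alpha * d / (sqrt gamma * (S * (S * S))) *
                          (((1 + sqrt gamma) * exp th) * (S * sqrt (gamma / d)))).
    { apply Rmult_le_compat_l; [lra|]. apply Rmult_le_compat; auto using Rabs_pos. }
    right. field. split; lra.
Qed.

Lemma G2_bound_on_strip d alpha gamma thm thM eps th W :
  0 < d -> 0 < alpha -> 1 < gamma -> 0 < thm -> thm <= th <= thM -> 0 < eps <= Egam d gamma th W ->
  Rabs (G2 d alpha gamma th W) <=
    (sqrt gamma ^ 3 + / sinh thm) / sqrt d
    + alpha * d * (1 + sqrt gamma) * sqrt (gamma / d) * exp thM / (sqrt gamma * eps).
Proof.
  intros Hd Ha Hg Hthm [Hth1 Hth2] [Heps HE]. pose proof (sqrt_gt1 gamma Hg).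
  eapply Rle_trans; [apply G2_bound; auto; lra|].
  assert (Hsd : 0 < sqrt d) by (apply sqrt_lt_R0; auto).
  assert (Hs1 : / sinh th <= / sinh thm).
  { apply Rinv_le_contravar; [apply sinh_pos; auto|].
    destruct Hth1 as [h|h]; [left; apply sinh_lt; auto|rewrite h; lra]. }
  assert (Hex : exp th <= exp thM) by (apply exp_le_compat; auto).
  assert (Hie : / Egam d gamma th W <= / eps) by (apply Rinv_le_contravar; auto).
  assert (Hk : 0 <= alpha * d * (1 + sqrt gamma) * sqrt (gamma / d)).
  { pose proof (sqrt_pos (gamma / d)). apply Rmult_le_pos; [|auto]. apply Rmult_le_pos; [apply Rmult_le_pos|]; lra. }
  apply Rplus_le_compat.
  - unfold Rdiv. apply Rmult_le_compat_r; [left; apply Rinv_0_lt_compat; auto|]. lra.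
  - unfold Rdiv. rewrite !Rinv_mult.
    assert (0 < / sqrt gamma) by (apply Rinv_0_lt_compat; lra).
    pose proof (exp_pos th).
    assert (0 < / Egam d gamma th W) by (apply Rinv_0_lt_compat; lra).
    apply Rmult_le_compat; nra.
Qed.

(* On a level set of [hamiltonian], [th] and the energy are bounded below; then [G1] is bounded,
   hence [th] grows at most linearly, and this bounds [G2] on bounded time intervals. *)
Lemma vortex_a_priori_bounded d alpha gamma th0 W0 :
  0 < d -> 0 < alpha -> 1 < gamma -> energy_domain d gamma th0 W0 ->
  a_priori_bounded (G1 d alpha gamma) (G2 d alpha gamma) (energy_domain d gamma) th0 W0.
Proof.
  intros Hd Ha Hg HU0 T HT. pose proof (sqrt_gt1 gamma Hg) as Hsg.
  set (H0 := hamiltonian d alpha gamma th0 W0).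
  destruct (level_set_theta_lower_bound d alpha gamma H0 Hd Ha Hg) as [thm [Hthm Hlow1]].
  destruct (level_set_energy_lower_bound d alpha gamma H0 thm Hd Ha Hg Hthm) as [eps [Heps Hlow2]].
  set (C1 := alpha * sqrt gamma / eps).
  assert (HC1 : 0 < C1) by (apply Rdiv_lt_0_compat; nra).
  set (thM := th0 + C1 * T).
  set (C2 := (sqrt gamma ^ 3 + / sinh thm) / sqrt d
             + alpha * d * (1 + sqrt gamma) * sqrt (gamma / d) * exp thM / (sqrt gamma * eps)).
  exists (Rmax C1 C2), (fun q1 q2 => thm <= q1 /\ eps <= Egam d gamma q1 q2).
  split; [apply Rle_trans with C1; [lra|apply Rmax_l]|].
  split; [intros q1 q2 [A B]; split; lra|].
  split.
  { apply (closed_plane_set_and (fun q1 _ => thm <= q1)); apply closed_plane_set_ge;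
      [apply lipschitz_near_pt_fst|apply lipschitz_near_pt_Egam]. }
  intros a th W [Ha0 HaT] HS E1 E2.
  assert (HK : forall t, - a < t < a -> thm <= th t /\ eps <= Egam d gamma (th t) (W t)).
  { intros t Ht. destruct (HS t Ht) as [_ [_ [U1 U2]]].
    assert (HH : hamiltonian d alpha gamma (th t) (W t) = H0)
      by (rewrite (hamiltonian_const d alpha gamma a th W Hd Hg HS t Ht), E1, E2; reflexivity).
    pose proof (Hlow1 _ _ U1 U2 HH). split; auto. }
  assert (HG1 : forall t, - a < t < a -> Rabs (G1 d alpha gamma (th t) (W t)) <= C1).
  { intros t Ht. destruct (HK t Ht) as [_ B]. eapply Rle_trans; [apply G1_bound; auto; lra|].
    unfold C1. apply Rmult_le_compat_l; [nra|]. apply Rinv_le_contravar; auto. }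
  assert (Hth : forall t, - a < t < a -> th t <= thM).
  { intros t Ht.
    assert (Hm : Rabs (th t - th 0) <= C1 * Rabs (t - 0)).
    { apply (mean_value_bound th (fun c => G1 d alpha gamma (th c) (W c))). intros c Hc.
      pose proof (between_in_interval (- a) a 0 t c ltac:(lra) Ht Hc) as Hcin.
      split; [apply HS, Hcin|apply HG1, Hcin]. }
    assert (Rabs (t - 0) <= T) by (rewrite Rminus_0_r; unfold Rabs; destruct Rcase_abs; lra).
    assert (C1 * Rabs (t - 0) <= C1 * T) by (apply Rmult_le_compat_l; lra).
    pose proof (Rle_abs (th t - th 0)). unfold thM. rewrite <- E1. lra. }
  intros t Ht. destruct (HK t Ht) as [A B]. split; [split; auto|]. split.
  - eapply Rle_trans; [apply HG1; auto|apply Rmax_l].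
  - eapply Rle_trans; [|apply Rmax_r]. apply G2_bound_on_strip; auto.
Qed.

Theorem theorem3 (d alpha gamma : R) (hd : 0 < d) (halpha : 0 < alpha) (hgamma : 1 < gamma)
  (th0 W0 : R) (h0 : Omega gamma th0 W0) :
  exists th W : R -> R,
    is_global_solution d alpha gamma th0 W0 th W /\
    (forall th' W' : R -> R, is_global_solution d alpha gamma th0 W0 th' W' ->
       forall t, th' t = th t /\ W' t = W t).
Proof.
  assert (HOmega : forall th W, Omega gamma th W <-> energy_domain d gamma th W)
    by (intros; apply Omega_iff_energy_domain; auto).
  pose proof (vortex_locally_lipschitz d alpha gamma hd hgamma) as HLL.
  assert (HU0 : energy_domain d gamma th0 W0) by (apply HOmega; auto).
  destruct (global_solution_exists _ _ _ HLL th0 W0 HU0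
              (vortex_a_priori_bounded d alpha gamma th0 W0 hd halpha hgamma HU0))
    as [th [W [E1 [E2 HS]]]].
  exists th, W. split.
  - assert (Hc : forall t, continuity_pt (fun s => G1 d alpha gamma (th s) (W s)) t /\
                           continuity_pt (fun s => G2 d alpha gamma (th s) (W s)) t)
      by (intros t; destruct (HS t) as [? [? ?]]; apply (continuous_along_solution _ _ _ HLL); auto).
    split; [intro t; apply HS|]. split; [intro t; apply HS|].
    split; [intro t; apply Hc|]. split; [intro t; apply Hc|].
    split; [auto|]. split; [auto|]. intros t. apply HOmega, HS.
  - intros th' W' [D1 [D2 [_ [_ [F1 [F2 HO]]]]]] t.
    apply (global_solution_unique _ _ _ HLL th' W' th W); [|exact HS|congruence|congruence].
    intros s. split; [apply D1|split; [apply D2|apply HOmega, HO]].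
Qed.
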